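(* Let $E$ be a separable Banach sequence lattice containing all unit vectors $e_k$, on which the shifts $\tau_n$, $n\in\mathbb Z$, are bounded, and assume that with $s_k:=\|e_k\|_E$, $$k_+(E)=\lim_{n\to\infty}\Big(\sup_{k>n}\frac{s_k}{s_{k-n}}\Big)^{1/n},\qquad k_-(E)=\lim_{n\to\infty}\Big(\sup_{k\in\mathbb N}\frac{s_k}{s_{n+k}}\Big)^{1/n}.$$ For $\lambda>0$ let $T_\lambda=\tau_1-\lambda I$ on $E$. Then the following are equivalent: (i) $T_\lambda$ is an isomorphic embedding of $E$ into itself (there is $c>0$ with $\|T_\lambda x\|_E\ge c\|x\|_E$ for all $x$); (ii) $T_\lambda$ has closed range; (iii) $\lambda\in(0,1/k_-(E))\cup(k_+(E),\infty)$. Moreover, if $\lambda>k_+(E)$ then $T_\lambda(E)=E$, and if $0<\lambda<1/k_-(E)$ then $T_\lambda(E)$ is the closed subspace of codimension $1$ in $E$ consisting of all $(a_k)\in E$ with $\sum_{k=1}^\infty\lambda^ka_k=0$ (this series converging for every $(a_k)\in E$).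
   Context: A Banach sequence lattice is a Banach space $E$ of real sequences such that $x\in E$, $|y_k|\le|x_k|$ imply $y\in E$, $\|y\|_E\le\|x\|_E$. For $n\in\mathbb Z$, $\tau_nx=(x_{k-n})_{k\ge1}$ with $x_j:=0$ for $j\notin\mathbb N$. For a Banach sequence lattice on which all $\tau_n$ are bounded, $k_+(E)=\lim_{n\to\infty}\|\tau_n\|_E^{1/n}$ and $k_-(E)=\lim_{n\to\infty}\|\tau_{-n}\|_E^{1/n}$; the hypothesis says these exponents are computed by the displayed formulas involving only the norms of unit vectors. *)

From Stdlib Require Import Reals Lra Lia ZArith Arith.
From Coquelicot Require Import Coquelicot.
Open Scope R_scope.

(* Real sequences are indexed by nat; index i here is index i+1 of the paper. *)
Definition seqR := nat -> R.

Definition sadd (x y : seqR) : seqR := fun k => x k + y k.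
Definition sscal (a : R) (x : seqR) : seqR := fun k => a * x k.
Definition ssub (x y : seqR) : seqR := fun k => x k - y k.
Definition szero : seqR := fun _ => 0.

(* unit vector e_{k+1} of the paper *)
Definition unitv (k : nat) : seqR := fun i => if Nat.eqb i k then 1 else 0.

Record BanachSeqLattice (E : seqR -> Prop) (N : seqR -> R) : Prop := {
  bsl_zero : E szero;
  bsl_add : forall x y, E x -> E y -> E (sadd x y);
  bsl_scal : forall a x, E x -> E (sscal a x);
  bsl_norm_nonneg : forall x, E x -> 0 <= N x;
  bsl_norm_def : forall x, E x -> N x = 0 -> x = szero;
  bsl_norm_scal : forall a x, E x -> N (sscal a x) = Rabs a * N x;
  bsl_norm_tri : forall x y, E x -> E y -> N (sadd x y) <= N x + N y;
  bsl_solid : forall x y, E x -> (forall k, Rabs (y k) <= Rabs (x k)) ->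
                E y /\ N y <= N x;
  bsl_complete : forall u : nat -> seqR, (forall n, E (u n)) ->
     (forall eps, 0 < eps -> exists M, forall m n, (M <= m)%nat -> (M <= n)%nat ->
         N (ssub (u m) (u n)) < eps) ->
     exists x, E x /\ forall eps, 0 < eps -> exists M, forall n, (M <= n)%nat ->
         N (ssub (u n) x) < eps }.

Definition separable (E : seqR -> Prop) (N : seqR -> R) : Prop :=
  exists d : nat -> seqR, (forall n, E (d n)) /\
    forall x, E x -> forall eps, 0 < eps -> exists n, N (ssub x (d n)) < eps.

(* shift tau_n, n : Z: (tau_n x)_k = x_{k-n}, with x_j = 0 outside the index set *)
Definition tau (n : Z) (x : seqR) : seqR := fun k =>
  if Z.leb 0 n then
    (if Nat.leb (Z.to_nat n) k then x (k - Z.to_nat n)%nat else 0)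
  else x (k + Z.to_nat (- n))%nat.

Definition shifts_bounded (E : seqR -> Prop) (N : seqR -> R) : Prop :=
  forall n : Z, (forall x, E x -> E (tau n x)) /\
     exists C, forall x, E x -> N (tau n x) <= C * N x.

Definition opnorm (E : seqR -> Prop) (N : seqR -> R) (T : seqR -> seqR) : R :=
  real (Glb_Rbar (fun C => 0 <= C /\ forall x, E x -> N (T x) <= C * N x)).

(* k_+(E) = lim ||tau_n||^{1/n}, k_-(E) = lim ||tau_{-n}||^{1/n}
   (sequences reindexed by n+1 to avoid n = 0) *)
Definition kplus (E : seqR -> Prop) (N : seqR -> R) : R :=
  real (Lim_seq (fun n => Rpower (opnorm E N (tau (Z.of_nat (S n)))) (/ INR (S n)))).
Definition kminus (E : seqR -> Prop) (N : seqR -> R) : R :=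
  real (Lim_seq (fun n => Rpower (opnorm E N (tau (- Z.of_nat (S n)))) (/ INR (S n)))).

(* sup_{k>n} s_k / s_{k-n}, in 0-based indices: sup_j s_{j+n} / s_j *)
Definition supplus (N : seqR -> R) (n : nat) : R :=
  real (Sup_seq (fun j => Finite (N (unitv (j + n)) / N (unitv j)))).
Definition supminus (N : seqR -> R) (n : nat) : R :=
  real (Sup_seq (fun j => Finite (N (unitv j) / N (unitv (n + j))))).

Definition Tlam (lam : R) (x : seqR) : seqR := fun k => tau 1 x k - lam * x k.

Definition iso_embedding (E : seqR -> Prop) (N : seqR -> R) (T : seqR -> seqR) : Prop :=
  exists c, 0 < c /\ forall x, E x -> c * N x <= N (T x).

Definition closed_range (E : seqR -> Prop) (N : seqR -> R) (T : seqR -> seqR) : Prop :=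
  forall y, E y ->
    (forall eps, 0 < eps -> exists x, E x /\ N (ssub y (T x)) < eps) ->
    exists x, E x /\ y = T x.

(* the functional a |-> sum_{k>=1} lambda^k a_k (0-based: lambda^(k+1) a k) *)
Definition lamterm (lam : R) (a : seqR) : nat -> R := fun k => lam ^ (S k) * a k.

From Stdlib Require Import Reals ZArith Lra Lia FunctionalExtensionality Classical ClassicalEpsilon.
From Coquelicot Require Import Coquelicot.
Open Scope R_scope.

(* Write A_n = ||tau_n||, B_n = ||tau_{-n}|| and s_k = N(e_k).  Since s_{j+n}/s_j <= A_n,
   s_j/s_{j+n} <= B_n and A_n <= A_1^n, the hypotheses force A_n^(1/n) -> k_+ and
   B_n^(1/n) -> k_-; moreover k_+ k_- >= 1, so 1/k_- <= k_+.  Then: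
   - lam > k_+: lam^{-n} A_n decays geometrically, so T_lam is bounded below and the
     Neumann series -sum lam^{-(n+1)} tau_n inverts it.
   - lam < 1/k_-: lam^n B_n decays geometrically, so T_lam is bounded below, the functional
     f(a) = sum lam^(k+1) a_k converges on E, vanishes on the range, and the series
     sum lam^n tau_{-(n+1)} y solves T_lam x = y whenever f(y) = 0.
   - 1/k_- < lam < k_+: the weight s_i/lam^i has a peak, and the peak vector on which
     T_lam is small rules out a lower bound; the endpoints follow by perturbation
     (lower bounds are stable under small changes of lam, and in the degenerate case
     1/k_- = k_+ surjectivity would transfer across lam by a fixed-point argument).
   - Separability makes the norm order continuous, so without a lower bound there are
     approximate kernel vectors with disjoint supports; a weighted sum of them shows
     that the range is not closed.  Conversely a lower bound gives a closed range. *)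

Lemma Rpower_root_pow (a : R) (m : nat) :
  0 < a -> (1 <= m)%nat -> Rpower (Rpower a (/ INR m)) (INR m) = a.
Proof.
  intros Ha Hm. rewrite Rpower_mult, Rinv_l by (apply not_0_INR; lia).
  apply Rpower_1; auto.
Qed.

Lemma Rpower_pow_root (a : R) (m : nat) :
  0 < a -> (1 <= m)%nat -> Rpower (a ^ m) (/ INR m) = a.
Proof.
  intros Ha Hm. rewrite <- Rpower_pow, Rpower_mult, Rinv_r by (auto; apply not_0_INR; lia).
  apply Rpower_1; auto.
Qed.

Lemma root_lt_pow (a r : R) (m : nat) :
  0 < a -> 0 < r -> (1 <= m)%nat -> Rpower a (/ INR m) < r -> a < r ^ m.
Proof.
  intros Ha Hr Hm H. rewrite <- (Rpower_root_pow a m), <- Rpower_pow by auto.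
  apply Rlt_Rpower_l; [apply lt_0_INR; lia|]. split; [apply exp_pos|auto].
Qed.

Lemma root_gt_pow (a r : R) (m : nat) :
  0 < a -> 0 < r -> (1 <= m)%nat -> r < Rpower a (/ INR m) -> r ^ m < a.
Proof.
  intros Ha Hr Hm H. rewrite <- (Rpower_root_pow a m), <- Rpower_pow by auto.
  apply Rlt_Rpower_l; [apply lt_0_INR; lia|]. split; auto.
Qed.

Lemma root_lim_upper (a : nat -> R) (l r : R) : (forall n, 0 < a n) -> 0 < r -> l < r ->
  is_lim_seq (fun n => Rpower (a (S n)) (/ INR (S n))) l ->
  exists M, forall n, (M <= n)%nat -> a n < r ^ n.
Proof.
  intros Ha Hr Hlr H. apply is_lim_seq_spec in H.
  destruct (H (mkposreal (r - l) ltac:(lra))) as [M HM].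
  exists (S M). intros [|n] Hn; [lia|].
  specialize (HM n ltac:(lia)). cbn [pos] in HM. apply Rabs_lt_between in HM.
  apply root_lt_pow; [apply Ha|auto|lia|lra].
Qed.

Lemma root_lim_lower (a : nat -> R) (l r : R) : (forall n, 0 < a n) -> 0 < r -> r < l ->
  is_lim_seq (fun n => Rpower (a (S n)) (/ INR (S n))) l ->
  exists M, forall n, (M <= n)%nat -> r ^ n < a n.
Proof.
  intros Ha Hr Hlr H. apply is_lim_seq_spec in H.
  destruct (H (mkposreal (l - r) ltac:(lra))) as [M HM].
  exists (S M). intros [|n] Hn; [lia|].
  specialize (HM n ltac:(lia)). cbn [pos] in HM. apply Rabs_lt_between in HM.
  apply root_gt_pow; [apply Ha|auto|lia|lra].
Qed.

Lemma pow_small (q eps : R) : 0 <= q < 1 -> 0 < eps ->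
  exists M, forall n, (M <= n)%nat -> q ^ n < eps.
Proof.
  intros Hq He. assert (Hq' : Rabs q < 1) by (rewrite Rabs_pos_eq; lra).
  pose proof (is_lim_seq_geom q Hq') as H. apply is_lim_seq_spec in H.
  destruct (H (mkposreal eps He)) as [M HM]. exists M; intros n Hn.
  specialize (HM n Hn). simpl in HM. rewrite Rminus_0_r in HM.
  eapply Rle_lt_trans; [apply Rle_abs|]; auto.
Qed.

Lemma pow_large (q r : R) : 1 < q -> exists M, forall n, (M <= n)%nat -> r < q ^ n.
Proof.
  intros Hq. pose proof (is_lim_seq_geom_p q Hq) as H. apply is_lim_seq_spec in H.
  destruct (H r) as [M HM]. exists M; auto.
Qed.

Lemma inv_succ_small (eps : R) : 0 < eps -> exists M, forall n, (M <= n)%nat -> / INR (S n) < eps.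
Proof.
  intros He. destruct (INR_archimed eps 1) as [M HM]; [lra|].
  exists M. intros n Hn. assert (HS : 0 < INR (S n)) by (apply lt_0_INR; lia).
  apply Rmult_lt_reg_r with (INR (S n)); auto. rewrite Rinv_l by lra.
  assert (INR M <= INR (S n)) by (apply le_INR; lia). nra.
Qed.

(* If 0 < b_n <= a_n <= K with b_n -> l and l = Lim a, then a_n -> l: the lim inf of a
   is at least l, and the lim sup/lim inf average equals l. *)
Lemma lim_seq_from_below (a b : nat -> R) (K l : R) :
  (forall n, 0 < b n <= a n) -> (forall n, a n <= K) -> is_lim_seq b l ->
  l = real (Lim_seq a) -> is_lim_seq a l.
Proof.
  intros Hba HK Hb Hl.
  pose proof (proj2_sig (ex_LimSup_seq a)) as HS. pose proof (proj2_sig (ex_LimInf_seq a)) as HI.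
  change (is_LimSup_seq a (LimSup_seq a)) in HS. change (is_LimInf_seq a (LimInf_seq a)) in HI.
  unfold Lim_seq in Hl.
  destruct (LimSup_seq a) as [s| |] eqn:Es.
  2: { destruct (HS K O) as [n [_ Hn]]. specialize (HK n); lra. }
  2: { destruct (HS 0) as [M HM]. specialize (HM M (le_n _)). specialize (Hba M); lra. }
  destruct (LimInf_seq a) as [i| |] eqn:Ei.
  2: { destruct (HI K) as [M HM]. specialize (HM M (le_n _)). specialize (HK M); lra. }
  2: { destruct (HI 0 O) as [n [_ Hn]]. specialize (Hba n); lra. }
  simpl in Hl.
  assert (Hil : l <= i).
  { apply Rnot_lt_le; intro Hlt.
    set (e := (l - i) / 2). assert (He : 0 < e) by (unfold e; lra).
    apply is_lim_seq_spec in Hb. destruct (Hb (mkposreal e He)) as [M HM].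
    destruct (proj1 (HI (mkposreal e He)) M) as [n [Hn Han]]. simpl in *.
    specialize (HM n Hn). apply Rabs_lt_between in HM. specialize (Hba n). unfold e in *; lra. }
  assert (His : i <= s) by exact (is_LimSup_LimInf_seq_le a s i HS HI).
  assert (s = l) by lra. assert (i = l) by lra. subst s i.
  apply is_LimSup_LimInf_lim_seq; auto.
Qed.

Lemma sup_seq_props (u : nat -> R) (K : R) : (forall j, 0 < u j <= K) ->
  let s := real (Sup_seq (fun j => Finite (u j))) in
  0 < s /\ s <= K /\ (forall j, u j <= s) /\ (forall r, r < s -> exists j, r < u j).
Proof.
  intros Hu s. pose proof (Sup_seq_correct (fun j => Finite (u j))) as H.
  unfold s. destruct (Sup_seq (fun j => Finite (u j))) as [v| |]; simpl in H |- *.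
  - assert (Hle : forall j, u j <= v).
    { intro j. apply Rnot_lt_le; intro Hlt. destruct (H (mkposreal (u j - v) ltac:(lra))) as [H1 _].
      specialize (H1 j). simpl in H1. lra. }
    assert (Hap : forall r, r < v -> exists j, r < u j).
    { intros r Hr. destruct (H (mkposreal (v - r) ltac:(lra))) as [_ [j Hj]]. exists j. simpl in Hj. lra. }
    split; [|split; [|split]]; auto.
    + specialize (Hle O). specialize (Hu O). lra.
    + apply Rnot_lt_le; intro Hlt. destruct (Hap K Hlt) as [j Hj]. specialize (Hu j); lra.
  - destruct (H K) as [j Hj]. simpl in Hj. specialize (Hu j); lra.
  - specialize (H (u O) O). simpl in H. lra.
Qed.

Lemma finite_argmax (g : nat -> R) (j c : nat) : (j <= c)%nat ->
  exists k, (j <= k <= c)%nat /\ forall i, (j <= i <= c)%nat -> g i <= g k.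
Proof.
  intros H. replace c with (j + (c - j))%nat by lia. generalize (c - j)%nat as d. clear H c.
  induction d as [|d [k [Hk Hmax]]].
  - exists j. split; [lia|]. intros i Hi. replace i with j by lia. lra.
  - destruct (Rle_lt_dec (g (j + S d)%nat) (g k)).
    + exists k. split; [lia|]. intros i Hi.
      destruct (Nat.eq_dec i (j + S d)); [subst; auto|]. apply Hmax; lia.
    + exists (j + S d)%nat. split; [lia|]. intros i Hi.
      destruct (Nat.eq_dec i (j + S d)); [subst; lra|]. specialize (Hmax i ltac:(lia)). lra.
Qed.

Lemma peak_exists (g : nat -> R) (K Mv : R) :
  (forall i, 0 < g i) -> 1 <= K -> 1 < Mv -> (forall i, g i <= K * g (S i)) ->
  (exists j P, (j <= P)%nat /\ Mv * g j < g P) ->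
  (forall P eps, 0 < eps -> exists j' c, (P < c)%nat /\ (j' <= c)%nat /\ g c < eps * g j') ->
  exists j k c, (j <= k < c)%nat /\ Mv * g j <= g k /\ Mv * g c <= g k.
Proof.
  intros Hg HK HMv Hstep [j [P [HjP HgP]]] Hfall.
  assert (Hback : forall i d, g i <= K ^ d * g (i + d)%nat).
  { intros i d. induction d as [|d IH]; [rewrite Nat.add_0_r; simpl; lra|].
    replace (i + S d)%nat with (S (i + d)) by lia.
    pose proof (Hstep (i + d)%nat). pose proof (pow_le K d ltac:(lra)).
    simpl. apply Rle_trans with (K ^ d * g (i + d)%nat); [auto|]. nra. }
  assert (HKP : 1 <= K ^ P) by (apply pow_R1_Rle; lra).
  destruct (Hfall P (/ (K ^ P * Mv))) as [j' [c [HPc [Hj'c Hgc]]]].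
  { apply Rinv_0_lt_compat. nra. }
  destruct (finite_argmax g j c) as [k [Hk Hmax]]; [lia|].
  assert (HPk : g P <= g k) by (apply Hmax; lia).
  assert (Hj'k : g j' <= K ^ P * g k).
  { destruct (Nat.le_gt_cases j' P).
    - pose proof (Hback j' (P - j')%nat) as Hb. replace (j' + (P - j'))%nat with P in Hb by lia.
      assert (K ^ (P - j') <= K ^ P) by (apply Rle_pow; lia || lra).
      pose proof (Hg P). nra.
    - assert (g j' <= g k) by (apply Hmax; lia). pose proof (Hg k). nra. }
  assert (Hck : Mv * g c <= g k).
  { apply Rmult_lt_compat_l with (r := K ^ P * Mv) in Hgc; [|nra].
    rewrite <- Rmult_assoc, Rinv_r, Rmult_1_l in Hgc by nra. nra. }
  exists j, k, c. repeat split; try lia; try lra.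
  destruct (Nat.eq_dec k c) as [->|]; [|lia]. pose proof (Hg c). nra.
Qed.

(* 0 < lam < 1/k forces k > 0 (recall that 1/0 = 0). *)
Lemma pos_of_lt_inv (lam k : R) : 0 < lam -> lam < / k -> 0 < k.
Proof.
  intros Hl H. destruct (Rlt_or_le 0 k) as [|Hk]; auto.
  destruct (Rle_lt_or_eq_dec _ _ Hk) as [Hlt| ->].
  - pose proof (Rinv_lt_0_compat k Hlt). lra.
  - rewrite Rinv_0 in H. lra.
Qed.

Lemma near_open_interval (a b lam c : R) : a < b -> a <= lam <= b -> 0 < c ->
  exists mu, a < mu < b /\ Rabs (mu - lam) < c.
Proof.
  intros Hab Hl Hc. set (s := c / (c + (b - a))).
  assert (Hs : 0 < s < 1).
  { unfold s. split; [apply Rdiv_lt_0_compat; lra|].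
    apply Rmult_lt_reg_r with (c + (b - a)); [lra|]. field_simplify; lra. }
  assert (Hsc : s * (b - a) < c).
  { unfold s. apply Rmult_lt_reg_r with (c + (b - a)); [lra|]. field_simplify; nra. }
  exists (lam + s * ((a + b) / 2 - lam)). split; [split; nra|].
  replace (lam + s * ((a + b) / 2 - lam) - lam) with (s * ((a + b) / 2 - lam)) by ring.
  rewrite Rabs_mult, Rabs_pos_eq by lra. apply Rle_lt_trans with (s * (b - a)); [|auto].
  apply Rmult_le_compat_l; [lra|]. apply Rabs_le; lra.
Qed.

Lemma tau_pos_eq (n : nat) (x : seqR) (k : nat) :
  tau (Z.of_nat n) x k = if Nat.leb n k then x (k - n)%nat else 0.
Proof.
  unfold tau. assert (Z.leb 0 (Z.of_nat n) = true) by (apply Z.leb_le; lia).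
  rewrite H, Nat2Z.id. reflexivity.
Qed.

Lemma tau_neg_eq (n : nat) (x : seqR) (k : nat) : tau (- Z.of_nat n) x k = x (k + n)%nat.
Proof.
  unfold tau. destruct n as [|n].
  - simpl. rewrite Nat.sub_0_r, Nat.add_0_r. reflexivity.
  - assert (Z.leb 0 (- Z.of_nat (S n)) = false) by (apply Z.leb_gt; lia).
    rewrite H, Z.opp_involutive, Nat2Z.id. reflexivity.
Qed.

Lemma tau_zero (x : seqR) : tau 0 x = x.
Proof.
  apply functional_extensionality; intro k. change 0%Z with (Z.of_nat 0).
  rewrite tau_pos_eq. simpl. rewrite Nat.sub_0_r. reflexivity.
Qed.

Lemma tau_pos_S (n : nat) (x : seqR) : tau (Z.of_nat (S n)) x = tau 1 (tau (Z.of_nat n) x).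
Proof.
  apply functional_extensionality; intro k. change 1%Z with (Z.of_nat 1). rewrite !tau_pos_eq.
  destruct k as [|k]; simpl; auto. rewrite Nat.sub_0_r. reflexivity.
Qed.

Lemma tau_neg_S (n : nat) (x : seqR) : tau (- Z.of_nat (S n)) x = tau (-1) (tau (- Z.of_nat n) x).
Proof.
  apply functional_extensionality; intro k. change (-1)%Z with (- Z.of_nat 1)%Z.
  rewrite !tau_neg_eq. f_equal. lia.
Qed.

Lemma tau_neg_pos (n : nat) (x : seqR) : tau (- Z.of_nat n) (tau (Z.of_nat n) x) = x.
Proof.
  apply functional_extensionality; intro k. rewrite tau_neg_eq, tau_pos_eq.
  destruct (Nat.leb_spec n (k + n)); [f_equal|]; lia.
Qed.

Lemma tau_pos_unitv (n j : nat) : tau (Z.of_nat n) (unitv j) = unitv (j + n).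
Proof.
  apply functional_extensionality; intro k. rewrite tau_pos_eq. unfold unitv.
  destruct (Nat.leb_spec n k); destruct (Nat.eqb_spec (k - n) j);
    destruct (Nat.eqb_spec k (j + n)); auto; lia.
Qed.

Lemma tau_neg_unitv (n j : nat) : tau (- Z.of_nat n) (unitv (j + n)) = unitv j.
Proof.
  apply functional_extensionality; intro k. rewrite tau_neg_eq. unfold unitv.
  destruct (Nat.eqb_spec (k + n) (j + n)); destruct (Nat.eqb_spec k j); auto; lia.
Qed.

Lemma Tlam_eq (lam : R) (x : seqR) (k : nat) :
  Tlam lam x k = match k with O => 0 | S k' => x k' end - lam * x k.
Proof.
  unfold Tlam. change 1%Z with (Z.of_nat 1). rewrite tau_pos_eq.
  destruct k; simpl; [|rewrite Nat.sub_0_r]; reflexivity.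
Qed.

Lemma Tlam_add (lam : R) (x y : seqR) : Tlam lam (sadd x y) = sadd (Tlam lam x) (Tlam lam y).
Proof. apply functional_extensionality; intro k. unfold sadd. rewrite !Tlam_eq. destruct k; ring. Qed.

Lemma Tlam_scal (lam a : R) (x : seqR) : Tlam lam (sscal a x) = sscal a (Tlam lam x).
Proof. apply functional_extensionality; intro k. unfold sscal. rewrite !Tlam_eq. destruct k; ring. Qed.

Lemma Tlam_sub (lam : R) (x y : seqR) : Tlam lam (ssub x y) = ssub (Tlam lam x) (Tlam lam y).
Proof. apply functional_extensionality; intro k. unfold ssub. rewrite !Tlam_eq. destruct k; ring. Qed.

Lemma Tlam_perturb (lam mu : R) (x : seqR) :
  Tlam lam x = sadd (Tlam mu x) (sscal (mu - lam) x).
Proof. apply functional_extensionality; intro k. unfold sadd, sscal, Tlam. ring. Qed.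

Lemma Tlam_tau (lam : R) (n : nat) (x : seqR) :
  Tlam lam (tau (Z.of_nat n) x) = tau (Z.of_nat n) (Tlam lam x).
Proof.
  apply functional_extensionality; intro k. rewrite Tlam_eq, !tau_pos_eq.
  destruct k as [|k].
  - destruct (Nat.leb_spec n 0); [|ring].
    replace (0 - n)%nat with 0%nat by lia. rewrite Tlam_eq. ring.
  - rewrite tau_pos_eq. destruct (Nat.leb_spec n (S k)); destruct (Nat.leb_spec n k); try lia.
    + replace (S k - n)%nat with (S (k - n)) by lia. rewrite Tlam_eq. reflexivity.
    + replace n with (S k) by lia. rewrite Nat.sub_diag, Tlam_eq. ring.
    + ring.
Qed.

Lemma shift_identity_plus (lam : R) (m : nat) (x : seqR) :
  sscal lam (tau (Z.of_nat m) x) = ssub (tau (Z.of_nat (S m)) x) (tau (Z.of_nat m) (Tlam lam x)).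
Proof.
  apply functional_extensionality; intro k. unfold sscal, ssub. rewrite !tau_pos_eq.
  destruct (Nat.leb_spec m k); destruct (Nat.leb_spec (S m) k); try lia.
  - rewrite Tlam_eq. replace (k - m)%nat with (S (k - S m)) by lia. ring.
  - replace k with m by lia. rewrite Nat.sub_diag, Tlam_eq. ring.
  - ring.
Qed.

Lemma shift_identity_minus (lam : R) (m : nat) (x : seqR) :
  tau (- Z.of_nat m) x =
  sadd (tau (- Z.of_nat (S m)) (Tlam lam x)) (sscal lam (tau (- Z.of_nat (S m)) x)).
Proof.
  apply functional_extensionality; intro k. unfold sadd, sscal. rewrite !tau_neg_eq.
  replace (k + S m)%nat with (S (k + m)) by lia. rewrite Tlam_eq. ring.
Qed.

Lemma Tlam_zero_below (lam : R) (u : seqR) (P : nat) : 0 < lam ->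
  (forall k, (k < P)%nat -> Tlam lam u k = 0) -> forall k, (k < P)%nat -> u k = 0.
Proof.
  intros Hl H k. induction k as [|k IH]; intros Hk; specialize (H _ Hk); rewrite Tlam_eq in H.
  - nra.
  - rewrite IH in H by lia. nra.
Qed.

Definition trunc (x : seqR) (b : nat) : seqR := fun i => if Nat.ltb i b then x i else 0.
Definition tail (x : seqR) (b : nat) : seqR := fun i => if Nat.ltb i b then 0 else x i.
Definition block (x : seqR) (n m : nat) : seqR :=
  fun i => if andb (Nat.leb n i) (Nat.ltb i m) then x i else 0.

Lemma Tlam_trunc (lam : R) (x : seqR) (b : nat) :
  Tlam lam (trunc x (S b)) = sadd (trunc (Tlam lam x) (S b)) (sscal (x b) (unitv (S b))).
Proof.
  apply functional_extensionality; intro k. unfold sadd, sscal, trunc, unitv. rewrite !Tlam_eq.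
  destruct k as [|k]; [simpl; ring|].
  destruct (Nat.ltb_spec (S k) (S b)); destruct (Nat.ltb_spec k (S b));
    destruct (Nat.eqb_spec (S k) (S b)); try lia; try ring.
  replace k with b by lia. ring.
Qed.

Definition peakvec (lam : R) (j c : nat) : seqR :=
  fun i => if andb (Nat.leb j i) (Nat.ltb i c) then lam ^ j / lam ^ i else 0.

Lemma Tlam_peakvec (lam : R) (j c : nat) : 0 < lam -> (j < S c)%nat ->
  Tlam lam (peakvec lam j (S c)) =
  sadd (sscal (lam ^ j / lam ^ c) (unitv (S c))) (sscal (- lam) (unitv j)).
Proof.
  intros Hl Hjc. apply functional_extensionality; intro i.
  rewrite Tlam_eq. unfold sadd, sscal, unitv, peakvec.
  assert (Hp : forall n, lam ^ n <> 0) by (intro; apply pow_nonzero; lra).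
  assert (Hl0 : lam <> 0) by lra.
  destruct i as [|i].
  - destruct (Nat.leb_spec j 0); destruct (Nat.ltb_spec 0 (S c)); destruct (Nat.eqb_spec 0 j);
      simpl; try lia.
    all: try (subst; simpl; field; auto; fail). all: try (simpl; ring; fail).
  - destruct (Nat.leb_spec j i); destruct (Nat.ltb_spec i (S c)); destruct (Nat.leb_spec j (S i));
    destruct (Nat.ltb_spec (S i) (S c)); destruct (Nat.eqb_spec (S i) (S c));
    destruct (Nat.eqb_spec (S i) j); simpl; try lia.
    all: try (subst; simpl; field; auto; fail).
    all: try (injection e; intro; subst; simpl; field; auto; fail).
    all: try (simpl; ring; fail).
Qed.

Lemma sum_lamterm_Tlam (lam : R) (x : seqR) (n : nat) :
  sum_n (lamterm lam (Tlam lam x)) n = - lam ^ (S (S n)) * x n.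
Proof.
  induction n as [|n IH].
  - rewrite sum_O. unfold lamterm. rewrite Tlam_eq. simpl. ring.
  - rewrite sum_Sn, IH. change (plus ?a ?b) with (a + b).
    unfold lamterm. rewrite Tlam_eq. simpl. ring.
Qed.

Lemma series_lamterm_e0 (lam : R) : Series (lamterm lam (unitv 0)) = lam.
Proof.
  apply is_series_unique. change (is_lim_seq (sum_n (lamterm lam (unitv 0))) lam).
  apply is_lim_seq_ext with (u := fun _ => lam); [|apply is_lim_seq_const].
  intro n. induction n as [|n IH].
  - rewrite sum_O. unfold lamterm, unitv. simpl. ring.
  - rewrite sum_Sn, <- IH. change (plus ?a ?b) with (a + b). unfold lamterm, unitv. simpl. ring.
Qed.

Fixpoint neumann_plus (lam : R) (y : seqR) (m : nat) : seqR :=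
  match m with
  | O => szero
  | S m' => sadd (neumann_plus lam y m') (sscal (- / lam ^ (S m')) (tau (Z.of_nat m') y))
  end.

Lemma Tlam_neumann_plus (lam : R) (y : seqR) (m k : nat) : 0 < lam ->
  Tlam lam (neumann_plus lam y m) k = y k - / lam ^ m * tau (Z.of_nat m) y k.
Proof.
  intros Hl. assert (Hp : forall n, lam ^ n <> 0) by (intro; apply pow_nonzero; lra).
  induction m as [|m IH].
  - simpl. rewrite Tlam_eq. change 0%Z with (Z.of_nat 0). rewrite tau_pos_eq. simpl.
    rewrite Nat.sub_0_r. unfold szero. destruct k; field.
  - simpl neumann_plus. rewrite Tlam_add, Tlam_scal. unfold sadd, sscal. rewrite IH, Tlam_eq, !tau_pos_eq.
    destruct k as [|k].
    + destruct (Nat.leb_spec m 0); destruct (Nat.leb_spec (S m) 0); try lia.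
      * replace m with 0%nat by lia. simpl. field. lra.
      * simpl. field. split; auto; lra.
    + rewrite tau_pos_eq.
      destruct (Nat.leb_spec m (S k)); destruct (Nat.leb_spec (S m) (S k));
        destruct (Nat.leb_spec m k); try lia.
      * replace (S k - S m)%nat with (k - m)%nat by lia. simpl. field. split; auto; lra.
      * replace m with (S k) by lia. rewrite Nat.sub_diag. simpl. field. split; auto; lra.
      * simpl. field. split; auto; lra.
Qed.

Fixpoint neumann_minus (lam : R) (y : seqR) (m : nat) : seqR :=
  match m with
  | O => szero
  | S m' => sadd (neumann_minus lam y m') (sscal (lam ^ m') (tau (- Z.of_nat (S m')) y))
  end.

Fixpoint psum (lam : R) (y : seqR) (m : nat) : R :=
  match m with O => 0 | S m' => psum lam y m' + lam ^ m' * y m' end.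

Lemma Tlam_neumann_minus (lam : R) (y : seqR) (m k : nat) :
  Tlam lam (neumann_minus lam y m) k =
  y k - lam ^ m * y (k + m)%nat - match k with O => psum lam y m | S _ => 0 end.
Proof.
  induction m as [|m IH].
  - simpl. rewrite Tlam_eq. unfold szero. rewrite Nat.add_0_r. destruct k; ring.
  - change (neumann_minus lam y (S m)) with
      (sadd (neumann_minus lam y m) (sscal (lam ^ m) (tau (- Z.of_nat (S m)) y))).
    rewrite Tlam_add, Tlam_scal. unfold sadd, sscal. rewrite IH, Tlam_eq.
    destruct k as [|k]; rewrite !tau_neg_eq.
    + simpl. ring.
    + replace (k + S m)%nat with (S (k + m)) by lia.
      replace (S k + S m)%nat with (S (S (k + m))) by lia.
      replace (S k + m)%nat with (S (k + m)) by lia. simpl. ring.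
Qed.

Lemma psum_sum_n (lam : R) (y : seqR) (n : nat) :
  lam * psum lam y (S n) = sum_n (lamterm lam y) n.
Proof.
  induction n as [|n IH].
  - rewrite sum_O. unfold lamterm. simpl. ring.
  - rewrite sum_Sn. change (plus ?a ?b) with (a + b). rewrite <- IH. unfold lamterm. simpl. ring.
Qed.

Lemma lamterm_shift_lim0 (lam : R) (y : seqR) (k : nat) : 0 < lam -> ex_series (lamterm lam y) ->
  is_lim_seq (fun m => lam ^ m * y (k + m)%nat) 0.
Proof.
  intros Hl Hex. pose proof (ex_series_lim_0 _ Hex) as H0. apply (is_lim_seq_incr_n _ k) in H0.
  apply is_lim_seq_scal_l with (a := / lam ^ (S k)) in H0. simpl in H0. rewrite Rmult_0_r in H0.
  eapply is_lim_seq_ext; [|apply H0]. intro m. unfold lamterm.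
  replace (m + k)%nat with (k + m)%nat by lia. rewrite <- tech_pow_Rmult.
  replace (S (k + m)) with (S k + m)%nat by lia. rewrite pow_add. field.
  split; [apply pow_nonzero|]; lra.
Qed.

Lemma psum_lim0 (lam : R) (y : seqR) : 0 < lam -> ex_series (lamterm lam y) ->
  Series (lamterm lam y) = 0 -> is_lim_seq (psum lam y) 0.
Proof.
  intros Hl Hex Hs. pose proof (Series_correct _ Hex) as Hsc. rewrite Hs in Hsc.
  change (is_lim_seq (sum_n (lamterm lam y)) 0) in Hsc.
  apply (is_lim_seq_incr_n _ 1).
  apply is_lim_seq_ext with (u := fun n => / lam * sum_n (lamterm lam y) n).
  - intro n. rewrite <- psum_sum_n. replace (n + 1)%nat with (S n) by lia. field. lra.
  - replace 0 with (/ lam * 0) by ring. apply is_lim_seq_scal_l with (lu := Finite 0). auto.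
Qed.

Fixpoint wsum (X : nat -> seqR) (m : nat) : seqR :=
  match m with O => szero | S m' => sadd (wsum X m') (sscal (2 ^ m') (X m')) end.

Lemma incr_mono (P : nat -> nat) : (forall n, (P n < P (S n))%nat) ->
  forall n m, (n <= m)%nat -> (P n <= P m)%nat.
Proof. intros HP n m H. induction H as [|m H IH]; auto. specialize (HP m). lia. Qed.

Lemma wsum_zero_above (X : nat -> seqR) (P : nat -> nat) : (forall n, (P n < P (S n))%nat) ->
  (forall n k, (P (S n) <= k)%nat -> X n k = 0) -> forall m k, (P m <= k)%nat -> wsum X m k = 0.
Proof.
  intros HP HX m k Hk. induction m as [|m IH]; simpl; unfold szero; auto.
  unfold sadd, sscal. rewrite IH, HX by (auto; pose proof (HP m); lia). ring.
Qed.

Lemma Tlam_wsum_stable (lam : R) (X : nat -> seqR) (P : nat -> nat) :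
  (forall n, (P n < P (S n))%nat) -> (forall n k, (k < P n)%nat -> X n k = 0) ->
  forall m m' k, (m <= m')%nat -> (k < P m)%nat -> Tlam lam (wsum X m') k = Tlam lam (wsum X m) k.
Proof.
  intros HP HX m m' k Hm Hk. induction Hm as [|m' Hm IH]; auto. simpl wsum.
  rewrite Tlam_add, Tlam_scal. unfold sadd, sscal. rewrite IH, (Tlam_eq lam (X m')).
  pose proof (incr_mono P HP m m' Hm). rewrite (HX m' k) by lia.
  destruct k; [ring|]. rewrite (HX m' k) by lia. ring.
Qed.

Section ShiftOperators.
Variables (E : seqR -> Prop) (N : seqR -> R).
Hypothesis HB : BanachSeqLattice E N.
Hypothesis HU : forall k, E (unitv k).

Lemma E_add (x y : seqR) : E x -> E y -> E (sadd x y).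
Proof. apply (bsl_add _ _ HB). Qed.

Lemma E_scal (a : R) (x : seqR) : E x -> E (sscal a x).
Proof. apply (bsl_scal _ _ HB). Qed.

Lemma E_sub (x y : seqR) : E x -> E y -> E (ssub x y).
Proof.
  intros Hx Hy. replace (ssub x y) with (sadd x (sscal (-1) y)).
  - apply E_add; [|apply E_scal]; auto.
  - apply functional_extensionality; intro k; unfold sadd, sscal, ssub; ring.
Qed.

Lemma N_nonneg (x : seqR) : E x -> 0 <= N x.
Proof. apply (bsl_norm_nonneg _ _ HB). Qed.

Lemma N_scal (a : R) (x : seqR) : E x -> N (sscal a x) = Rabs a * N x.
Proof. apply (bsl_norm_scal _ _ HB). Qed.

Lemma N_tri (x y : seqR) : E x -> E y -> N (sadd x y) <= N x + N y.
Proof. apply (bsl_norm_tri _ _ HB). Qed.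

Lemma solid_E (x y : seqR) : E x -> (forall k, Rabs (y k) <= Rabs (x k)) -> E y.
Proof. intros Hx H. apply (bsl_solid _ _ HB x y Hx H). Qed.

Lemma solid_N (x y : seqR) : E x -> (forall k, Rabs (y k) <= Rabs (x k)) -> N y <= N x.
Proof. intros Hx H. apply (bsl_solid _ _ HB x y Hx H). Qed.

Lemma dominated_cutoff (x y : seqR) : (forall k, y k = x k \/ y k = 0) ->
  forall k, Rabs (y k) <= Rabs (x k).
Proof.
  intros H k. destruct (H k) as [-> | ->]; [lra|]. rewrite Rabs_R0. apply Rabs_pos.
Qed.

Lemma N_sub_sym (x y : seqR) : E x -> E y -> N (ssub x y) = N (ssub y x).
Proof.
  intros Hx Hy. replace (ssub x y) with (sscal (-1) (ssub y x)).
  - rewrite N_scal by (apply E_sub; auto). rewrite Rabs_left by lra. ring.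
  - apply functional_extensionality; intro k; unfold sscal, ssub; ring.
Qed.

Lemma N_tri_sub (x y z : seqR) : E x -> E y -> E z ->
  N (ssub x z) <= N (ssub x y) + N (ssub y z).
Proof.
  intros Hx Hy Hz. replace (ssub x z) with (sadd (ssub x y) (ssub y z)).
  - apply N_tri; apply E_sub; auto.
  - apply functional_extensionality; intro k; unfold sadd, ssub; ring.
Qed.

Lemma N_sub_le (x y : seqR) : E x -> E y -> N (ssub x y) <= N x + N y.
Proof.
  intros Hx Hy. replace (ssub x y) with (sadd x (sscal (-1) y)).
  - eapply Rle_trans; [apply N_tri; auto; apply E_scal; auto|].
    rewrite N_scal, Rabs_left by (auto; lra). lra.
  - apply functional_extensionality; intro; unfold ssub, sadd, sscal; ring.
Qed.

Lemma N_szero : N szero = 0.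
Proof.
  replace szero with (sscal 0 szero) by
    (apply functional_extensionality; intro; unfold sscal, szero; ring).
  rewrite N_scal by apply (bsl_zero _ _ HB). rewrite Rabs_R0. ring.
Qed.

Lemma N_small_eq (x y : seqR) : E x -> E y ->
  (forall eps, 0 < eps -> N (ssub x y) < eps) -> x = y.
Proof.
  intros Hx Hy H.
  assert (Hz : N (ssub x y) = 0).
  { pose proof (N_nonneg _ (E_sub _ _ Hx Hy)). destruct (Rle_lt_or_eq_dec _ _ H0); auto.
    specialize (H _ r); lra. }
  apply (bsl_norm_def _ _ HB) in Hz; [|apply E_sub; auto].
  apply functional_extensionality; intro k.
  assert (ssub x y k = szero k) by (rewrite Hz; auto). unfold ssub, szero in H0; lra.
Qed.

Lemma unitv_pos (k : nat) : 0 < N (unitv k).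
Proof.
  destruct (Rle_lt_or_eq_dec _ _ (N_nonneg _ (HU k))) as [|e]; auto.
  symmetry in e. apply (bsl_norm_def _ _ HB) in e; auto.
  assert (unitv k k = szero k) by (rewrite e; auto).
  unfold unitv, szero in H. rewrite Nat.eqb_refl in H. lra.
Qed.

Lemma coord_bound (x : seqR) (k : nat) : E x -> Rabs (x k) * N (unitv k) <= N x.
Proof.
  intros Hx. rewrite <- N_scal by auto. apply (solid_N x); auto.
  intro i. unfold sscal, unitv. destruct (Nat.eqb_spec i k).
  - subst; rewrite Rmult_1_r; lra.
  - rewrite Rmult_0_r, Rabs_R0. apply Rabs_pos.
Qed.

Lemma E_finsupp (b : nat) (x : seqR) : (forall i, (b <= i)%nat -> x i = 0) -> E x.
Proof.
  revert x. induction b as [|b IH]; intros x Hx.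
  - replace x with szero; [apply (bsl_zero _ _ HB)|].
    apply functional_extensionality; intro i. rewrite Hx by lia. reflexivity.
  - replace x with (sadd (trunc x b) (sscal (x b) (unitv b))).
    + apply E_add; [|apply E_scal; auto]. apply IH. intros i Hi.
      unfold trunc. destruct (Nat.ltb_spec i b); auto; lia.
    + apply functional_extensionality; intro i. unfold sadd, sscal, unitv, trunc.
      destruct (Nat.ltb_spec i b); destruct (Nat.eqb_spec i b); subst; try lia; try ring.
      rewrite (Hx i) by lia. ring.
Qed.

Lemma trunc_E (x : seqR) (b : nat) : E x -> E (trunc x b).
Proof.
  intros Hx. apply (solid_E x _ Hx), dominated_cutoff. intro k; unfold trunc.
  destruct (Nat.ltb k b); auto.
Qed.

Lemma tail_E (x : seqR) (b : nat) : E x -> E (tail x b).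
Proof.
  intros Hx. apply (solid_E x _ Hx), dominated_cutoff. intro k; unfold tail.
  destruct (Nat.ltb k b); auto.
Qed.

Definition nconv (u : nat -> seqR) (x : seqR) : Prop :=
  forall eps, 0 < eps -> exists M, forall n, (M <= n)%nat -> N (ssub (u n) x) < eps.

Lemma nconv_coord (u : nat -> seqR) (x : seqR) (k : nat) : (forall n, E (u n)) -> E x ->
  nconv u x -> is_lim_seq (fun n => u n k) (x k).
Proof.
  intros Hu Hx Hc. apply is_lim_seq_spec. intro eps. pose proof (unitv_pos k).
  destruct (Hc (eps * N (unitv k))) as [M HM]; [apply Rmult_lt_0_compat; auto; apply cond_pos|].
  exists M; intros n Hn. specialize (HM n Hn).
  pose proof (coord_bound _ k (E_sub _ _ (Hu n) Hx)) as Hb.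
  change (ssub (u n) x k) with (u n k - x k) in Hb.
  apply Rmult_lt_reg_r with (N (unitv k)); auto. lra.
Qed.

Lemma complete (u : nat -> seqR) : (forall n, E (u n)) ->
  (forall eps, 0 < eps -> exists M, forall m n, (M <= m)%nat -> (M <= n)%nat ->
     N (ssub (u m) (u n)) < eps) ->
  exists x, E x /\ nconv u x.
Proof. apply (bsl_complete _ _ HB). Qed.

Lemma geom_increments_bound (u : nat -> seqR) (C q : R) (M : nat) :
  (forall n, E (u n)) -> 0 <= q < 1 ->
  (forall n, (M <= n)%nat -> N (ssub (u (S n)) (u n)) <= C * q ^ n) ->
  forall m k, (M <= m)%nat -> N (ssub (u (k + m)%nat) (u m)) <= C * q ^ m * (1 - q ^ k) / (1 - q).
Proof.
  intros Hu Hq Hs m k Hm. induction k as [|k IH].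
  - simpl. replace (ssub (u m) (u m)) with (sscal 0 (u m)).
    + rewrite N_scal by auto. rewrite Rabs_R0, Rmult_0_l. right; field; lra.
    + apply functional_extensionality; intro; unfold ssub, sscal; ring.
  - eapply Rle_trans; [apply (N_tri_sub _ (u (k + m)%nat)); auto|].
    specialize (Hs (k + m)%nat ltac:(lia)). simpl (S k + m)%nat. rewrite pow_add in Hs.
    apply Rle_trans with (C * (q ^ k * q ^ m) + C * q ^ m * (1 - q ^ k) / (1 - q)); [lra|].
    right. simpl. field. lra.
Qed.

Lemma complete_geom (u : nat -> seqR) (C q : R) (M : nat) : (forall n, E (u n)) -> 0 <= q < 1 ->
  (forall n, (M <= n)%nat -> N (ssub (u (S n)) (u n)) <= C * q ^ n) ->
  exists x, E x /\ nconv u x.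
Proof.
  intros Hu Hq Hs. apply complete; auto.
  set (C' := Rmax C 0). assert (HC' : 0 <= C') by apply Rmax_r.
  assert (Hd := geom_increments_bound u C' q M Hu Hq).
  specialize (Hd ltac:(intros n Hn; pose proof (pow_le q n (proj1 Hq)); pose proof (Rmax_l C 0);
                       eapply Rle_trans; [apply Hs; auto|]; apply Rmult_le_compat_r; auto)).
  intros eps He. set (delta := eps * (1 - q) / (2 * (C' + 1))).
  destruct (pow_small q delta Hq) as [K HK]; [unfold delta; apply Rdiv_lt_0_compat; nra|].
  assert (Htail : forall m k, (M + K <= m)%nat -> N (ssub (u (k + m)%nat) (u m)) < eps / 2).
  { intros m k Hm. specialize (HK m ltac:(lia)).
    pose proof (pow_le q k (proj1 Hq)). pose proof (pow_le q m (proj1 Hq)).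
    eapply Rle_lt_trans; [apply Hd; lia|].
    apply Rle_lt_trans with (C' * q ^ m / (1 - q)).
    { unfold Rdiv. apply Rmult_le_compat_r; [apply Rlt_le, Rinv_0_lt_compat; lra|].
      assert (0 <= C' * q ^ m) by (apply Rmult_le_pos; auto). nra. }
    apply Rmult_lt_reg_r with (1 - q); [lra|].
    replace (C' * q ^ m / (1 - q) * (1 - q)) with (C' * q ^ m) by (field; lra).
    apply Rle_lt_trans with ((C' + 1) * q ^ m); [nra|].
    apply Rlt_le_trans with ((C' + 1) * delta); [apply Rmult_lt_compat_l; lra|].
    right. unfold delta. field. lra. }
  exists (M + K)%nat. intros m n Hm Hn.
  eapply Rle_lt_trans; [apply (N_tri_sub _ (u (M + K)%nat)); auto|].
  rewrite (N_sub_sym (u (M + K)%nat)) by auto.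
  replace m with ((m - (M + K)) + (M + K))%nat by lia.
  replace n with ((n - (M + K)) + (M + K))%nat by lia.
  pose proof (Htail (M + K)%nat (m - (M + K))%nat (le_n _)).
  pose proof (Htail (M + K)%nat (n - (M + K))%nat (le_n _)). lra.
Qed.

Lemma contraction_fixpoint (F : seqR -> seqR) (r : R) : 0 <= r < 1 ->
  (forall x, E x -> E (F x)) ->
  (forall a b, E a -> E b -> N (ssub (F a) (F b)) <= r * N (ssub a b)) ->
  exists x, E x /\ F x = x.
Proof.
  intros Hr HFE HF. set (xs := fun n => Nat.iter n F szero).
  assert (Hxs : forall n, E (xs n)).
  { induction n as [|n IH]; [apply (bsl_zero _ _ HB)|]. apply HFE, IH. }
  assert (Hgeo : forall n, N (ssub (xs (S n)) (xs n)) <= N (ssub (xs 1%nat) (xs O)) * r ^ n).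
  { induction n as [|n IH]; [simpl; lra|].
    eapply Rle_trans; [apply (HF (xs (S n)) (xs n)); auto|].
    apply Rle_trans with (r * (N (ssub (xs 1%nat) (xs O)) * r ^ n)); [apply Rmult_le_compat_l; lra|].
    right. rewrite <- tech_pow_Rmult. ring. }
  destruct (complete_geom xs _ r O Hxs Hr (fun n _ => Hgeo n)) as [x [Hx Hconv]].
  exists x. split; auto. apply N_small_eq; auto. intros eps He.
  destruct (Hconv (eps / 2)) as [M HM]; [lra|].
  eapply Rle_lt_trans; [apply (N_tri_sub _ (xs (S M))); auto|].
  change (xs (S M)) with (F (xs M)) at 1.
  eapply Rle_lt_trans; [apply Rplus_le_compat_r, HF; auto|].
  rewrite (N_sub_sym x) by auto.
  pose proof (HM M (le_n _)). pose proof (HM (S M) ltac:(lia)).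
  pose proof (N_nonneg _ (E_sub _ _ (Hxs M) Hx)). nra.
Qed.

Hypothesis HS : shifts_bounded E N.

Lemma tau_E (z : Z) (x : seqR) : E x -> E (tau z x).
Proof. intros Hx. apply (proj1 (HS z)); auto. Qed.

Lemma opnorm_spec (T : seqR -> seqR) : (forall x, E x -> E (T x)) ->
  (exists C, forall x, E x -> N (T x) <= C * N x) ->
  0 <= opnorm E N T /\ (forall x, E x -> N (T x) <= opnorm E N T * N x) /\
  (forall C, 0 <= C -> (forall x, E x -> N (T x) <= C * N x) -> opnorm E N T <= C).
Proof.
  intros HT [C HC].
  set (S := fun C => 0 <= C /\ forall x, E x -> N (T x) <= C * N x).
  assert (HC' : S (Rmax C 0)).
  { split; [apply Rmax_r|]. intros x Hx. eapply Rle_trans; [apply HC; auto|].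
    apply Rmult_le_compat_r; [apply N_nonneg; auto|apply Rmax_l]. }
  destruct (Glb_Rbar_correct S) as [Hlb Hgr].
  assert (H0 : Rbar_le 0 (Glb_Rbar S)) by (apply Hgr; intros c [Hc _]; simpl; auto).
  assert (H1 : Rbar_le (Glb_Rbar S) (Rmax C 0)) by (apply Hlb; auto).
  unfold opnorm. fold S.
  destruct (Glb_Rbar S) as [g| |]; simpl in H0, H1; try contradiction.
  simpl. split; [auto|split].
  - intros x Hx. apply Rnot_lt_le; intro Hlt.
    destruct (Rle_lt_or_eq_dec _ _ (N_nonneg x Hx)) as [Hp|Hz].
    + assert (Hl : is_lb_Rbar S (N (T x) / N x)).
      { intros c [Hc Hc']. simpl. specialize (Hc' x Hx).
        apply Rmult_le_reg_r with (N x); auto. field_simplify; lra. }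
      apply Hgr in Hl. simpl in Hl.
      apply (Rmult_le_compat_r (N x)) in Hl; [|lra]. field_simplify in Hl; lra.
    + specialize (HC x Hx). rewrite <- Hz in HC, Hlt. lra.
  - intros c Hc Hc'. apply Hlb. split; auto.
Qed.

Definition shiftR_norm (n : nat) : R := opnorm E N (tau (Z.of_nat n)).
Definition shiftL_norm (n : nat) : R := opnorm E N (tau (- Z.of_nat n)).

Lemma shiftR_spec (n : nat) : 0 <= shiftR_norm n /\
  (forall x, E x -> N (tau (Z.of_nat n) x) <= shiftR_norm n * N x) /\
  (forall C, 0 <= C -> (forall x, E x -> N (tau (Z.of_nat n) x) <= C * N x) -> shiftR_norm n <= C).
Proof. apply opnorm_spec; [apply tau_E|apply (proj2 (HS _))]. Qed.

Lemma shiftL_spec (n : nat) : 0 <= shiftL_norm n /\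
  (forall x, E x -> N (tau (- Z.of_nat n) x) <= shiftL_norm n * N x) /\
  (forall C, 0 <= C -> (forall x, E x -> N (tau (- Z.of_nat n) x) <= C * N x) -> shiftL_norm n <= C).
Proof. apply opnorm_spec; [apply tau_E|apply (proj2 (HS _))]. Qed.

Lemma shiftR_bound (n : nat) (x : seqR) : E x -> N (tau (Z.of_nat n) x) <= shiftR_norm n * N x.
Proof. apply (shiftR_spec n). Qed.

Lemma shiftL_bound (n : nat) (x : seqR) : E x -> N (tau (- Z.of_nat n) x) <= shiftL_norm n * N x.
Proof. apply (shiftL_spec n). Qed.

Lemma shiftR_unit (n j : nat) : N (unitv (j + n)) <= shiftR_norm n * N (unitv j).
Proof. rewrite <- tau_pos_unitv. apply shiftR_bound; auto. Qed.

Lemma shiftL_unit (n j : nat) : N (unitv j) <= shiftL_norm n * N (unitv (j + n)).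
Proof. rewrite <- (tau_neg_unitv n j) at 1. apply shiftL_bound; auto. Qed.

Lemma shiftR_pos (n : nat) : 0 < shiftR_norm n.
Proof.
  pose proof (shiftR_unit n 0). pose proof (unitv_pos (0 + n)). pose proof (unitv_pos 0).
  pose proof (proj1 (shiftR_spec n)). nra.
Qed.

Lemma shiftL_pos (n : nat) : 0 < shiftL_norm n.
Proof.
  pose proof (shiftL_unit n 0). pose proof (unitv_pos (0 + n)). pose proof (unitv_pos 0).
  pose proof (proj1 (shiftL_spec n)). nra.
Qed.

Lemma shiftR_pow (n : nat) : shiftR_norm n <= shiftR_norm 1 ^ n.
Proof.
  apply shiftR_spec; [apply pow_le, shiftR_spec|].
  induction n as [|n IH]; intros x Hx.
  - change (Z.of_nat 0) with 0%Z. rewrite tau_zero. simpl; lra.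
  - rewrite tau_pos_S. eapply Rle_trans; [apply (shiftR_bound 1), tau_E; auto|].
    simpl. rewrite Rmult_assoc. apply Rmult_le_compat_l; [apply shiftR_spec|auto].
Qed.

Lemma shiftL_pow (n : nat) : shiftL_norm n <= shiftL_norm 1 ^ n.
Proof.
  apply shiftL_spec; [apply pow_le, shiftL_spec|].
  induction n as [|n IH]; intros x Hx.
  - change (- Z.of_nat 0)%Z with 0%Z. rewrite tau_zero. simpl; lra.
  - rewrite tau_neg_S. eapply Rle_trans; [apply (shiftL_bound 1), tau_E; auto|].
    simpl. rewrite Rmult_assoc. apply Rmult_le_compat_l; [apply shiftL_spec|auto].
Qed.

Lemma Tlam_E (lam : R) (x : seqR) : E x -> E (Tlam lam x).
Proof.
  intros Hx. replace (Tlam lam x) with (sadd (tau 1 x) (sscal (- lam) x)).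
  - apply E_add; [apply tau_E|apply E_scal]; auto.
  - apply functional_extensionality; intro k; unfold Tlam, sadd, sscal; ring.
Qed.

Lemma Tlam_bound (lam : R) (x : seqR) : E x -> N (Tlam lam x) <= (shiftR_norm 1 + Rabs lam) * N x.
Proof.
  intros Hx. replace (Tlam lam x) with (sadd (tau 1 x) (sscal (- lam) x)).
  - eapply Rle_trans; [apply N_tri; [apply tau_E|apply E_scal]; auto|].
    rewrite N_scal, Rabs_Ropp by auto. pose proof (shiftR_bound 1 x Hx). simpl in H. lra.
  - apply functional_extensionality; intro k; unfold Tlam, sadd, sscal; ring.
Qed.

Lemma iso_perturb (lam mu c : R) : (forall x, E x -> c * N x <= N (Tlam lam x)) ->
  forall x, E x -> (c - Rabs (mu - lam)) * N x <= N (Tlam mu x).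
Proof.
  intros Hbb x Hx. specialize (Hbb x Hx). rewrite (Tlam_perturb lam mu) in Hbb.
  pose proof (N_tri _ _ (Tlam_E mu x Hx) (E_scal (mu - lam) x Hx)).
  rewrite N_scal in H by auto. lra.
Qed.

(* An operator bounded below has closed range: preimages of an approximating sequence
   are Cauchy, and their limit is mapped onto the target. *)
Lemma iso_closed_range (lam : R) : iso_embedding E N (Tlam lam) -> closed_range E N (Tlam lam).
Proof.
  intros [c [Hc Hbb]] y Hy Happ.
  assert (Hs : forall n : nat, {x | E x /\ N (ssub y (Tlam lam x)) < / INR (S n)}).
  { intro n. apply constructive_indefinite_description, Happ.
    apply Rinv_0_lt_compat, lt_0_INR; lia. }
  set (xs := fun n => proj1_sig (Hs n)).
  assert (Hxs : forall n, E (xs n) /\ N (ssub y (Tlam lam (xs n))) < / INR (S n))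
    by (intro n; unfold xs; destruct (Hs n); auto).
  destruct (complete xs) as [x [Hx Hconv]]; [intro; apply Hxs|..].
  - intros eps He. destruct (inv_succ_small (c * eps / 2)) as [M HM]; [nra|].
    exists M. intros m n Hm Hn.
    destruct (Hxs m) as [Hm1 Hm2]. destruct (Hxs n) as [Hn1 Hn2].
    assert (c * N (ssub (xs m) (xs n)) <=
            N (ssub y (Tlam lam (xs m))) + N (ssub y (Tlam lam (xs n)))).
    { eapply Rle_trans; [apply Hbb, E_sub; auto|]. rewrite Tlam_sub.
      eapply Rle_trans; [apply (N_tri_sub _ y); auto; apply Tlam_E; auto|].
      rewrite (N_sub_sym (Tlam lam (xs m))) by (auto; apply Tlam_E; auto). lra. }
    pose proof (HM m Hm). pose proof (HM n Hn).
    apply Rmult_lt_reg_l with c; auto. lra.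
  - exists x. split; auto. apply N_small_eq; auto; [apply Tlam_E; auto|].
    intros eps He. set (L := shiftR_norm 1 + Rabs lam).
    assert (HL : 0 <= L) by (pose proof (proj1 (shiftR_spec 1)); pose proof (Rabs_pos lam); unfold L; lra).
    destruct (Hconv (eps / (2 * (L + 1)))) as [M1 HM1]; [apply Rdiv_lt_0_compat; lra|].
    destruct (inv_succ_small (eps / 2)) as [M2 HM2]; [lra|].
    set (n := (M1 + M2)%nat). destruct (Hxs n) as [Hn1 Hn2].
    eapply Rle_lt_trans; [apply (N_tri_sub _ (Tlam lam (xs n))); auto; apply Tlam_E; auto|].
    rewrite <- Tlam_sub.
    pose proof (Tlam_bound lam (ssub (xs n) x) (E_sub _ _ Hn1 Hx)). fold L in H.
    specialize (HM1 n ltac:(unfold n; lia)). specialize (HM2 n ltac:(unfold n; lia)).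
    assert (L * N (ssub (xs n) x) <= L * (eps / (2 * (L + 1)))) by (apply Rmult_le_compat_l; lra).
    assert (L * (eps / (2 * (L + 1))) < eps / 2).
    { apply Rmult_lt_reg_r with (2 * (L + 1)); [lra|]. field_simplify; lra. }
    lra.
Qed.

Lemma ratio_plus_bounds (n j : nat) : 0 < N (unitv (j + n)) / N (unitv j) <= shiftR_norm n.
Proof.
  pose proof (unitv_pos (j + n)). pose proof (unitv_pos j). pose proof (shiftR_unit n j).
  split; [apply Rdiv_lt_0_compat; auto|].
  apply Rmult_le_reg_r with (N (unitv j)); auto. field_simplify; lra.
Qed.

Lemma ratio_minus_bounds (n j : nat) : 0 < N (unitv j) / N (unitv (n + j)) <= shiftL_norm n.
Proof.
  pose proof (unitv_pos (n + j)). pose proof (unitv_pos j). pose proof (shiftL_unit n j).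
  rewrite Nat.add_comm in H1. split; [apply Rdiv_lt_0_compat; auto|].
  apply Rmult_le_reg_r with (N (unitv (n + j))); auto. field_simplify; lra.
Qed.

Lemma supplus_props (n : nat) : 0 < supplus N n /\ supplus N n <= shiftR_norm n /\
  (forall j, N (unitv (j + n)) / N (unitv j) <= supplus N n) /\
  (forall r, r < supplus N n -> exists j, r < N (unitv (j + n)) / N (unitv j)).
Proof. apply (sup_seq_props (fun j => N (unitv (j + n)) / N (unitv j))), ratio_plus_bounds. Qed.

Lemma supminus_props (n : nat) : 0 < supminus N n /\ supminus N n <= shiftL_norm n /\
  (forall j, N (unitv j) / N (unitv (n + j)) <= supminus N n) /\
  (forall r, r < supminus N n -> exists j, r < N (unitv j) / N (unitv (n + j))).
Proof. apply (sup_seq_props (fun j => N (unitv j) / N (unitv (n + j)))), ratio_minus_bounds. Qed.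

Hypothesis Hkp : is_lim_seq (fun n => Rpower (supplus N (S n)) (/ INR (S n))) (kplus E N).
Hypothesis Hkm : is_lim_seq (fun n => Rpower (supminus N (S n)) (/ INR (S n))) (kminus E N).

(* The roots A_n^(1/n) themselves converge to k_+ (they are squeezed between the
   unit-vector roots and A_1, and k_+ is by definition their Lim_seq). *)
Lemma shiftR_root_lim :
  is_lim_seq (fun n => Rpower (shiftR_norm (S n)) (/ INR (S n))) (kplus E N).
Proof.
  apply lim_seq_from_below with (b := fun n => Rpower (supplus N (S n)) (/ INR (S n)))
    (K := shiftR_norm 1); auto.
  - intro n. destruct (supplus_props (S n)) as [H1 [H2 _]]. split; [apply exp_pos|].
    apply Rle_Rpower_l; [apply Rlt_le, Rinv_0_lt_compat, lt_0_INR; lia|]. lra.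
  - intro n. pose proof (shiftR_pos 1).
    rewrite <- (Rpower_pow_root (shiftR_norm 1) (S n)) by (auto; lia).
    apply Rle_Rpower_l; [apply Rlt_le, Rinv_0_lt_compat, lt_0_INR; lia|].
    split; [apply shiftR_pos|apply shiftR_pow].
Qed.

Lemma shiftL_root_lim :
  is_lim_seq (fun n => Rpower (shiftL_norm (S n)) (/ INR (S n))) (kminus E N).
Proof.
  apply lim_seq_from_below with (b := fun n => Rpower (supminus N (S n)) (/ INR (S n)))
    (K := shiftL_norm 1); auto.
  - intro n. destruct (supminus_props (S n)) as [H1 [H2 _]]. split; [apply exp_pos|].
    apply Rle_Rpower_l; [apply Rlt_le, Rinv_0_lt_compat, lt_0_INR; lia|]. lra.
  - intro n. pose proof (shiftL_pos 1).
    rewrite <- (Rpower_pow_root (shiftL_norm 1) (S n)) by (auto; lia).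
    apply Rle_Rpower_l; [apply Rlt_le, Rinv_0_lt_compat, lt_0_INR; lia|].
    split; [apply shiftL_pos|apply shiftL_pow].
Qed.

Lemma kplus_nonneg : 0 <= kplus E N.
Proof.
  change (Rbar_le (Finite 0) (Finite (kplus E N))).
  eapply (is_lim_seq_le (fun _ => 0)); [|apply is_lim_seq_const|apply Hkp].
  intro; left; apply exp_pos.
Qed.

(* k_+ k_- >= 1, since (s_n/s_0) (s_0/s_n) = 1 bounds the product of the two suprema. *)
Lemma kplus_kminus_ge1 : 1 <= kplus E N * kminus E N.
Proof.
  change (Rbar_le (Finite 1) (Finite (kplus E N * kminus E N))).
  eapply (is_lim_seq_le (fun _ => 1)); [|apply is_lim_seq_const|apply (is_lim_seq_mult' _ _ _ _ Hkp Hkm)].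
  intro n. destruct (supplus_props (S n)) as [Hp0 [_ [Hp1 _]]].
  destruct (supminus_props (S n)) as [Hm0 [_ [Hm1 _]]].
  specialize (Hp1 O). specialize (Hm1 O). simpl in Hp1. rewrite Nat.add_0_r in Hm1.
  pose proof (unitv_pos O). pose proof (unitv_pos (S n)).
  rewrite Rpower_mult_distr by auto.
  assert (1 <= supplus N (S n) * supminus N (S n)).
  { apply Rle_trans with (N (unitv (S n)) / N (unitv 0) * (N (unitv 0) / N (unitv (S n)))).
    - right; field; lra.
    - apply Rmult_le_compat; auto; apply Rlt_le, Rdiv_lt_0_compat; auto. }
  replace 1 with (Rpower 1 (/ INR (S n))) at 1 by (unfold Rpower; rewrite ln_1, Rmult_0_r, exp_0; auto).
  apply Rle_Rpower_l; [apply Rlt_le, Rinv_0_lt_compat, lt_0_INR; lia|]. lra.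
Qed.

Lemma kminus_pos : 0 < kminus E N.
Proof.
  pose proof kplus_nonneg. pose proof kplus_kminus_ge1.
  destruct (Rle_lt_dec (kminus E N) 0); auto. nra.
Qed.

Lemma inv_kminus_le_kplus : / kminus E N <= kplus E N.
Proof.
  pose proof kminus_pos. pose proof kplus_kminus_ge1.
  apply Rmult_le_reg_r with (kminus E N); auto. rewrite Rinv_l by lra. lra.
Qed.

Lemma shiftR_decay (lam : R) : kplus E N < lam ->
  exists q M, 0 <= q < 1 /\ forall n, (M <= n)%nat -> / lam ^ n * shiftR_norm n <= q ^ n.
Proof.
  intros Hlt. pose proof kplus_nonneg. set (rho := (kplus E N + lam) / 2).
  destruct (root_lim_upper shiftR_norm (kplus E N) rho) as [M HM];
    [apply shiftR_pos|unfold rho; lra|unfold rho; lra|apply shiftR_root_lim|].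
  exists (rho / lam), M. split.
  - split; [apply Rlt_le, Rdiv_lt_0_compat; unfold rho; lra|].
    apply Rmult_lt_reg_r with lam; [lra|]. unfold rho; field_simplify; lra.
  - intros n Hn. specialize (HM n Hn). assert (0 < lam ^ n) by (apply pow_lt; lra).
    unfold Rdiv. rewrite Rpow_mult_distr, pow_inv, Rmult_comm.
    apply Rmult_le_compat_r; [apply Rlt_le, Rinv_0_lt_compat; auto|lra].
Qed.

Lemma shiftL_decay (lam : R) : 0 < lam -> lam < / kminus E N ->
  exists q M, 0 <= q < 1 /\ forall n, (M <= n)%nat -> lam ^ n * shiftL_norm n <= q ^ n.
Proof.
  intros Hl Hlt. pose proof (pos_of_lt_inv lam (kminus E N) Hl Hlt).
  assert (Hk : kminus E N < / lam).
  { apply Rmult_lt_reg_l with lam; auto. rewrite Rinv_r by lra.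
    apply Rmult_lt_compat_r with (r := kminus E N) in Hlt; auto. rewrite Rinv_l in Hlt; lra. }
  set (rho := (kminus E N + / lam) / 2).
  destruct (root_lim_upper shiftL_norm (kminus E N) rho) as [M HM];
    [apply shiftL_pos|unfold rho; lra|unfold rho; lra|apply shiftL_root_lim|].
  exists (lam * rho), M. split.
  - split; [apply Rlt_le, Rmult_lt_0_compat; unfold rho; lra|].
    apply Rmult_lt_reg_l with (/ lam); [apply Rinv_0_lt_compat; auto|].
    rewrite <- Rmult_assoc, Rinv_l, Rmult_1_l, Rmult_1_r by lra. unfold rho; lra.
  - intros n Hn. specialize (HM n Hn). rewrite Rpow_mult_distr.
    apply Rmult_le_compat_l; [apply pow_le; lra|lra].
Qed.

(** * The region lam > k_+ *)

Lemma iso_of_absorbing (T : seqR -> seqR) (K : R) : (forall x, E x -> E (T x)) -> 0 <= K ->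
  (forall x, E x -> N x <= / 2 * N x + K * N (T x)) -> iso_embedding E N T.
Proof.
  intros HT HK H. exists (/ (2 * K + 1)). split; [apply Rinv_0_lt_compat; lra|].
  intros x Hx. specialize (H x Hx). pose proof (N_nonneg _ (HT x Hx)).
  apply Rmult_le_reg_l with (2 * K + 1); [lra|].
  rewrite <- Rmult_assoc, Rinv_r, Rmult_1_l by lra. nra.
Qed.

Lemma plus_estimate (lam : R) (m : nat) : 0 < lam -> exists K, 0 <= K /\ forall x, E x ->
  N x <= / lam ^ m * N (tau (Z.of_nat m) x) + K * N (Tlam lam x).
Proof.
  intros Hl. induction m as [|m [K [HK0 HK]]].
  - exists 0. split; [lra|]. intros x Hx. change (Z.of_nat 0) with 0%Z. rewrite tau_zero.
    pose proof (N_nonneg _ (Tlam_E lam x Hx)). simpl. lra.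
  - pose proof (proj1 (shiftR_spec m)).
    assert (Hp : 0 < / lam ^ S m) by (apply Rinv_0_lt_compat, pow_lt; auto).
    exists (K + / lam ^ (S m) * shiftR_norm m). split; [nra|].
    intros x Hx. specialize (HK x Hx).
    assert (H1 : lam * N (tau (Z.of_nat m) x) <=
                 N (tau (Z.of_nat (S m)) x) + shiftR_norm m * N (Tlam lam x)).
    { rewrite <- (Rabs_pos_eq lam) at 1 by lra. rewrite <- N_scal by (apply tau_E; auto).
      rewrite shift_identity_plus. eapply Rle_trans; [apply N_sub_le; apply tau_E; auto; apply Tlam_E; auto|].
      apply Rplus_le_compat_l, shiftR_bound, Tlam_E; auto. }
    replace (/ lam ^ m) with (/ lam ^ S m * lam) in HK
      by (simpl; field; split; [apply pow_nonzero|]; lra).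
    nra.
Qed.

Lemma iso_plus (lam : R) : 0 < lam -> kplus E N < lam -> iso_embedding E N (Tlam lam).
Proof.
  intros Hl Hlt. destruct (shiftR_decay lam Hlt) as [q [M [Hq HM]]].
  destruct (pow_small q (/ 2) Hq) as [M' HM']; [lra|].
  set (m := (M + M')%nat). destruct (plus_estimate lam m Hl) as [K [HK0 HK]].
  apply (iso_of_absorbing _ K); [apply Tlam_E|auto|]. intros x Hx.
  eapply Rle_trans; [apply HK; auto|]. apply Rplus_le_compat_r.
  specialize (HM m ltac:(unfold m; lia)). specialize (HM' m ltac:(unfold m; lia)).
  pose proof (shiftR_bound m x Hx). pose proof (N_nonneg x Hx).
  assert (0 < / lam ^ m) by (apply Rinv_0_lt_compat, pow_lt; auto).
  apply Rle_trans with (/ lam ^ m * shiftR_norm m * N x); [nra|].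
  apply Rmult_le_compat_r; lra.
Qed.

Lemma Tlam_limit (lam : R) (u : nat -> seqR) (x y : seqR) : (forall n, E (u n)) -> E x ->
  nconv u x -> (forall k, is_lim_seq (fun m => Tlam lam (u m) k) (y k)) -> Tlam lam x = y.
Proof.
  intros Hu Hx Hc Hl. apply functional_extensionality; intro k.
  assert (H : is_lim_seq (fun m => Tlam lam (u m) k) (Tlam lam x k)).
  { apply is_lim_seq_ext with
      (u := fun m => match k with O => 0 | S k' => u m k' end - lam * u m k).
    { intro m. rewrite Tlam_eq. reflexivity. }
    rewrite Tlam_eq. apply is_lim_seq_minus'.
    - destruct k; [apply is_lim_seq_const|apply nconv_coord; auto].
    - apply is_lim_seq_scal_l with (lu := Finite (x k)), nconv_coord; auto. }
  apply is_lim_seq_unique in H. rewrite (is_lim_seq_unique _ _ (Hl k)) in H.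
  injection H; auto.
Qed.

Lemma surj_plus (lam : R) : 0 < lam -> kplus E N < lam ->
  forall y, E y -> exists x, E x /\ y = Tlam lam x.
Proof.
  intros Hl Hlt y Hy. destruct (shiftR_decay lam Hlt) as [q [M [Hq HM]]].
  assert (Hu : forall m, E (neumann_plus lam y m)).
  { induction m; simpl; [apply (bsl_zero _ _ HB)|]. apply E_add; auto. apply E_scal, tau_E; auto. }
  destruct (complete_geom (neumann_plus lam y) (/ lam * N y) q M) as [x [Hx Hc]]; auto.
  - intros n Hn.
    replace (ssub (neumann_plus lam y (S n)) (neumann_plus lam y n))
      with (sscal (- / lam ^ S n) (tau (Z.of_nat n) y))
      by (apply functional_extensionality; intro; unfold ssub; simpl; unfold sadd, sscal; ring).
    rewrite N_scal, Rabs_Ropp, Rabs_pos_eq by (try apply tau_E; auto; apply Rlt_le, Rinv_0_lt_compat, pow_lt; auto).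
    specialize (HM n Hn). pose proof (shiftR_bound n y Hy). pose proof (N_nonneg y Hy).
    assert (0 < / lam ^ n) by (apply Rinv_0_lt_compat, pow_lt; auto).
    replace (/ lam ^ S n) with (/ lam * / lam ^ n) by (simpl; field; split; [apply pow_nonzero|]; lra).
    assert (0 < / lam) by (apply Rinv_0_lt_compat; auto).
    apply Rle_trans with (/ lam * / lam ^ n * (shiftR_norm n * N y)).
    { apply Rmult_le_compat_l; [nra|auto]. }
    replace (/ lam * / lam ^ n * (shiftR_norm n * N y))
      with (/ lam * N y * (/ lam ^ n * shiftR_norm n)) by ring.
    apply Rmult_le_compat_l; [nra|auto].
  - exists x. split; auto. symmetry. apply (Tlam_limit lam (neumann_plus lam y)); auto.
    intro k. apply is_lim_seq_ext_loc with (u := fun _ => y k); [|apply is_lim_seq_const].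
    exists (S k). intros m Hm. rewrite Tlam_neumann_plus, tau_pos_eq by auto.
    destruct (Nat.leb_spec m k); [lia|ring].
Qed.

(** * The region lam < 1/k_- *)

Lemma minus_estimate (lam : R) (m : nat) : 0 < lam -> exists K, 0 <= K /\ forall x, E x ->
  N x <= lam ^ m * N (tau (- Z.of_nat m) x) + K * N (Tlam lam x).
Proof.
  intros Hl. induction m as [|m [K [HK0 HK]]].
  - exists 0. split; [lra|]. intros x Hx. change (- Z.of_nat 0)%Z with 0%Z. rewrite tau_zero.
    pose proof (N_nonneg _ (Tlam_E lam x Hx)). simpl. lra.
  - pose proof (proj1 (shiftL_spec (S m))). pose proof (pow_le lam m ltac:(lra)).
    exists (K + lam ^ m * shiftL_norm (S m)). split; [nra|].
    intros x Hx. specialize (HK x Hx).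
    assert (H1 : N (tau (- Z.of_nat m) x) <=
                 shiftL_norm (S m) * N (Tlam lam x) + lam * N (tau (- Z.of_nat (S m)) x)).
    { rewrite (shift_identity_minus lam).
      eapply Rle_trans; [apply N_tri; [apply tau_E, Tlam_E|apply E_scal, tau_E]; auto|].
      rewrite N_scal, Rabs_pos_eq by (try apply tau_E; auto; lra).
      apply Rplus_le_compat_r, shiftL_bound, Tlam_E; auto. }
    rewrite <- tech_pow_Rmult. nra.
Qed.

Lemma iso_minus (lam : R) : 0 < lam -> lam < / kminus E N -> iso_embedding E N (Tlam lam).
Proof.
  intros Hl Hlt. destruct (shiftL_decay lam Hl Hlt) as [q [M [Hq HM]]].
  destruct (pow_small q (/ 2) Hq) as [M' HM']; [lra|].
  set (m := (M + M')%nat). destruct (minus_estimate lam m Hl) as [K [HK0 HK]].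
  apply (iso_of_absorbing _ K); [apply Tlam_E|auto|]. intros x Hx.
  eapply Rle_trans; [apply HK; auto|]. apply Rplus_le_compat_r.
  specialize (HM m ltac:(unfold m; lia)). specialize (HM' m ltac:(unfold m; lia)).
  pose proof (shiftL_bound m x Hx). pose proof (N_nonneg x Hx). pose proof (pow_le lam m ltac:(lra)).
  apply Rle_trans with (lam ^ m * shiftL_norm m * N x); [nra|].
  apply Rmult_le_compat_r; lra.
Qed.

(* |lam^(k+1) a_k| <= (lam N a / s_0) lam^k B_k, using s_0 <= B_k s_k. *)
Lemma lamterm_bound (lam : R) (a : seqR) (k : nat) : 0 < lam -> E a ->
  Rabs (lamterm lam a k) <= lam * N a / N (unitv 0) * (lam ^ k * shiftL_norm k).
Proof.
  intros Hl Ha. unfold lamterm. rewrite Rabs_mult, Rabs_pos_eq by (apply pow_le; lra).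
  pose proof (coord_bound a k Ha). pose proof (shiftL_unit k 0). simpl in H0.
  pose proof (unitv_pos 0). pose proof (unitv_pos k).
  pose proof (Rabs_pos (a k)). pose proof (shiftL_pos k).
  assert (Rabs (a k) <= N a * shiftL_norm k / N (unitv 0)).
  { apply Rmult_le_reg_r with (N (unitv 0)); auto. field_simplify; [|lra].
    apply Rle_trans with (Rabs (a k) * (shiftL_norm k * N (unitv k))); nra. }
  simpl (lam ^ S k). apply Rle_trans with (lam * lam ^ k * (N a * shiftL_norm k / N (unitv 0))).
  - apply Rmult_le_compat_l; auto. apply Rmult_le_pos; [lra|apply pow_le; lra].
  - right. field. lra.
Qed.

Lemma ex_series_lam (lam : R) : 0 < lam -> lam < / kminus E N ->
  forall a, E a -> ex_series (lamterm lam a).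
Proof.
  intros Hl Hlt a Ha. destruct (shiftL_decay lam Hl Hlt) as [q [M [Hq HM]]].
  set (C := lam * N a / N (unitv 0)).
  assert (HC : 0 <= C).
  { unfold C. pose proof (unitv_pos 0). pose proof (N_nonneg a Ha).
    apply Rmult_le_pos; [nra|apply Rlt_le, Rinv_0_lt_compat; auto]. }
  apply (ex_series_incr_n _ M).
  apply (@ex_series_le R_AbsRing R_CompleteNormedModule) with (b := fun k => C * q ^ (M + k)).
  - intro k. change (norm (lamterm lam a (M + k)%nat)) with (Rabs (lamterm lam a (M + k)%nat)).
    eapply Rle_trans; [apply lamterm_bound; auto|]. fold C.
    apply Rmult_le_compat_l; auto. apply HM. lia.
  - apply ex_series_ext with (a := fun k => (C * q ^ M) * q ^ k).
    + intro k. rewrite pow_add, Rmult_assoc. reflexivity.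
    + apply (ex_series_scal_l _ (fun k => q ^ k)), ex_series_geom. rewrite Rabs_pos_eq; lra.
Qed.

(* f vanishes on the range of T_lam: its partial sums are -lam^(n+2) x_n -> 0. *)
Lemma series_Tlam_zero (lam : R) : 0 < lam -> lam < / kminus E N ->
  forall x, E x -> Series (lamterm lam (Tlam lam x)) = 0.
Proof.
  intros Hl Hlt x Hx. apply is_series_unique.
  pose proof (ex_series_lim_0 _ (ex_series_lam lam Hl Hlt x Hx)) as H0.
  change (is_lim_seq (sum_n (lamterm lam (Tlam lam x))) 0).
  apply is_lim_seq_ext with (u := fun n => - lam * lamterm lam x n).
  - intro n. rewrite sum_lamterm_Tlam. unfold lamterm. simpl. ring.
  - replace 0 with (- lam * 0) by ring. apply is_lim_seq_scal_l with (lu := Finite 0). auto.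
Qed.

(* Conversely every y with f(y) = 0 is in the range: the series sum lam^n tau_{-(n+1)} y
   converges, and its limit x satisfies T_lam x = y. *)
Lemma kernel_in_range (lam : R) : 0 < lam -> lam < / kminus E N ->
  forall y, E y -> Series (lamterm lam y) = 0 -> exists x, E x /\ y = Tlam lam x.
Proof.
  intros Hl Hlt y Hy Hs. destruct (shiftL_decay lam Hl Hlt) as [q [M [Hq HM]]].
  assert (Hv : forall m, E (neumann_minus lam y m)).
  { induction m; simpl; [apply (bsl_zero _ _ HB)|]. apply E_add; auto. apply E_scal, tau_E; auto. }
  destruct (complete_geom (neumann_minus lam y) (/ lam * N y) q M) as [x [Hx Hc]]; auto.
  - intros n Hn.
    replace (ssub (neumann_minus lam y (S n)) (neumann_minus lam y n))
      with (sscal (lam ^ n) (tau (- Z.of_nat (S n)) y))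
      by (apply functional_extensionality; intro; unfold ssub; simpl; unfold sadd, sscal; ring).
    rewrite N_scal, Rabs_pos_eq by (try apply tau_E; auto; apply pow_le; lra).
    specialize (HM (S n) ltac:(lia)). pose proof (shiftL_bound (S n) y Hy). pose proof (N_nonneg y Hy).
    pose proof (pow_le lam n ltac:(lra)). pose proof (pow_le q n ltac:(lra)).
    assert (Hdec : lam ^ n * shiftL_norm (S n) <= / lam * q ^ n).
    { apply Rmult_le_reg_l with lam; auto.
      replace (lam * (/ lam * q ^ n)) with (q ^ n) by (field; lra).
      replace (lam * (lam ^ n * shiftL_norm (S n))) with (lam ^ S n * shiftL_norm (S n)) by (simpl; ring).
      apply Rle_trans with (q ^ S n); auto. simpl. nra. }
    apply Rle_trans with (lam ^ n * shiftL_norm (S n) * N y); nra.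
  - exists x. split; auto. symmetry. apply (Tlam_limit lam (neumann_minus lam y)); auto.
    intro k. apply is_lim_seq_ext with
      (u := fun m => y k - lam ^ m * y (k + m)%nat - match k with O => psum lam y m | S _ => 0 end).
    { intro m. rewrite Tlam_neumann_minus. reflexivity. }
    pose proof (ex_series_lam lam Hl Hlt y Hy) as Hex.
    assert (Hp : is_lim_seq (fun m => match k with O => psum lam y m | S _ => 0 end) 0)
      by (destruct k; [apply psum_lim0|apply is_lim_seq_const]; auto).
    replace (y k) with (y k - 0 - 0) at 1 by ring.
    apply is_lim_seq_minus'; [apply is_lim_seq_minus'; [apply is_lim_seq_const|]|]; auto.
    apply lamterm_shift_lim0; auto.
Qed.

(** * The interval 1/k_- < lam < k_+ *)

(* The weight g_i = s_i / lam^i; T_lam is bounded below only if g has no "peaks". *)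
Definition weight (lam : R) (i : nat) : R := N (unitv i) / lam ^ i.

Lemma weight_pos (lam : R) (i : nat) : 0 < lam -> 0 < weight lam i.
Proof. intros Hl. apply Rdiv_lt_0_compat; [apply unitv_pos|apply pow_lt; auto]. Qed.

(* g_i <= K g_{i+1} with K = max(1, B_1 lam), from s_i <= B_1 s_{i+1}. *)
Lemma weight_step (lam : R) (i : nat) : 0 < lam ->
  weight lam i <= Rmax 1 (shiftL_norm 1 * lam) * weight lam (S i).
Proof.
  intros Hl. pose proof (shiftL_unit 1 i) as H. rewrite Nat.add_1_r in H.
  pose proof (weight_pos lam (S i) Hl). assert (0 < lam ^ i) by (apply pow_lt; auto).
  apply Rle_trans with (shiftL_norm 1 * lam * weight lam (S i)); [|apply Rmult_le_compat_r; [lra|apply Rmax_r]].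
  unfold weight. replace (shiftL_norm 1 * lam * (N (unitv (S i)) / lam ^ S i))
    with (shiftL_norm 1 * N (unitv (S i)) / lam ^ i) by (simpl; field; lra).
  unfold Rdiv. apply Rmult_le_compat_r; [apply Rlt_le, Rinv_0_lt_compat|]; auto.
Qed.

Lemma weight_rise (lam Mv : R) : 0 < lam -> lam < kplus E N ->
  exists j P, (j <= P)%nat /\ Mv * weight lam j < weight lam P.
Proof.
  intros Hl Hlt. set (rho := (lam + kplus E N) / 2).
  destruct (root_lim_lower (supplus N) (kplus E N) rho) as [M HM];
    [intro; apply supplus_props|unfold rho; lra|unfold rho; lra|apply Hkp|].
  destruct (pow_large (rho / lam) Mv) as [M' HM'].
  { apply Rmult_lt_reg_r with lam; auto. unfold Rdiv. rewrite Rmult_assoc, Rinv_l; unfold rho; lra. }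
  set (n := (M + M')%nat). specialize (HM' n ltac:(unfold n; lia)).
  destruct (proj2 (proj2 (proj2 (supplus_props n))) (rho ^ n)) as [j Hj]; [apply HM; unfold n; lia|].
  exists j, (j + n)%nat. split; [lia|].
  pose proof (unitv_pos j). pose proof (weight_pos lam j Hl).
  assert (Hp : 0 < lam ^ j * lam ^ n) by (apply Rmult_lt_0_compat; apply pow_lt; auto).
  assert (Hrise : rho ^ n * N (unitv j) < N (unitv (j + n))).
  { apply Rmult_lt_compat_r with (r := N (unitv j)) in Hj; auto.
    unfold Rdiv in Hj. rewrite Rmult_assoc, Rinv_l, Rmult_1_r in Hj by lra. auto. }
  apply Rlt_trans with ((rho / lam) ^ n * weight lam j); [apply Rmult_lt_compat_r; auto|].
  unfold weight. rewrite pow_add.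
  replace ((rho / lam) ^ n * (N (unitv j) / lam ^ j)) with (rho ^ n * N (unitv j) * / (lam ^ j * lam ^ n))
    by (unfold Rdiv; rewrite Rpow_mult_distr, pow_inv; field; split; apply pow_nonzero; lra).
  apply Rmult_lt_compat_r; [apply Rinv_0_lt_compat|]; auto.
Qed.

Lemma weight_fall (lam : R) (P : nat) (eps : R) : 0 < lam -> / kminus E N < lam -> 0 < eps ->
  exists j c, (P < c)%nat /\ (j <= c)%nat /\ weight lam c < eps * weight lam j.
Proof.
  intros Hl Hlt He. pose proof kminus_pos.
  assert (Hk : / lam < kminus E N).
  { apply Rmult_lt_reg_l with lam; auto. rewrite Rinv_r by lra.
    apply Rmult_lt_compat_r with (r := kminus E N) in Hlt; auto. rewrite Rinv_l in Hlt; lra. }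
  pose proof (Rinv_0_lt_compat lam Hl).
  set (sigma := (/ lam + kminus E N) / 2).
  assert (Hs : 1 < sigma * lam).
  { apply Rmult_lt_reg_l with (/ lam); auto.
    rewrite Rmult_1_r, Rmult_comm, Rmult_assoc, Rinv_r, Rmult_1_r by lra. unfold sigma; lra. }
  destruct (root_lim_lower (supminus N) (kminus E N) sigma) as [M HM];
    [intro; apply supminus_props|unfold sigma; lra|unfold sigma; lra|apply Hkm|].
  destruct (pow_small (/ (sigma * lam)) eps) as [M' HM']; auto.
  { split; [apply Rlt_le, Rinv_0_lt_compat; lra|]. rewrite <- Rinv_1. apply Rinv_lt_contravar; lra. }
  set (m := (M + M' + S P)%nat). specialize (HM' m ltac:(unfold m; lia)).
  destruct (proj2 (proj2 (proj2 (supminus_props m))) (sigma ^ m)) as [j Hj]; [apply HM; unfold m; lia|].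
  exists j, (m + j)%nat. split; [unfold m; lia|split; [lia|]].
  pose proof (unitv_pos (m + j)). pose proof (weight_pos lam j Hl).
  assert (Hs0 : 0 < sigma) by (unfold sigma; lra).
  assert (Hsig : 0 < sigma ^ m) by (apply pow_lt; auto).
  assert (Hp : 0 < sigma ^ m * lam ^ m * lam ^ j) by (repeat apply Rmult_lt_0_compat; auto; apply pow_lt; auto).
  assert (Hfall : sigma ^ m * N (unitv (m + j)) < N (unitv j)).
  { apply Rmult_lt_compat_r with (r := N (unitv (m + j))) in Hj; auto.
    unfold Rdiv in Hj. rewrite Rmult_assoc, Rinv_l, Rmult_1_r in Hj by lra. auto. }
  apply Rlt_trans with ((/ (sigma * lam)) ^ m * weight lam j); [|apply Rmult_lt_compat_r; auto].
  unfold weight.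
  replace (N (unitv (m + j)) / lam ^ (m + j)) with (sigma ^ m * N (unitv (m + j)) * / (sigma ^ m * lam ^ m * lam ^ j))
    by (rewrite pow_add; field; repeat split; try apply pow_nonzero; lra).
  replace ((/ (sigma * lam)) ^ m * (N (unitv j) / lam ^ j)) with (N (unitv j) * / (sigma ^ m * lam ^ m * lam ^ j))
    by (rewrite pow_inv, Rpow_mult_distr; field; repeat split; try apply pow_nonzero; lra).
  apply Rmult_lt_compat_r; [apply Rinv_0_lt_compat|]; auto.
Qed.

Lemma peakvec_E (lam : R) (j c : nat) : E (peakvec lam j c).
Proof.
  apply (E_finsupp c). intros i Hi. unfold peakvec.
  destruct (Nat.ltb_spec i c); [lia|]. rewrite Bool.andb_false_r. auto.
Qed.

Lemma peak_bound (lam cc : R) (j k c : nat) : 0 < lam -> 0 < cc ->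
  (forall x, E x -> cc * N x <= N (Tlam lam x)) -> (j <= k < c)%nat ->
  cc * weight lam k <= lam * (weight lam c + weight lam j).
Proof.
  intros Hl Hcc Hbb Hk. destruct c as [|c]; [lia|].
  set (x := peakvec lam j (S c)).
  assert (Hp : forall n, 0 < lam ^ n) by (intro; apply pow_lt; auto).
  assert (Hnz : forall n, lam ^ n <> 0) by (intro; apply pow_nonzero; lra).
  assert (Hx : E x) by apply peakvec_E.
  assert (HTx : N (Tlam lam x) <= lam * lam ^ j * (weight lam (S c) + weight lam j)).
  { unfold x. rewrite Tlam_peakvec by (auto; lia).
    eapply Rle_trans; [apply N_tri; apply E_scal; auto|].
    rewrite !N_scal, Rabs_Ropp, (Rabs_pos_eq lam) by (auto; lra).
    rewrite Rabs_pos_eq by (apply Rlt_le, Rdiv_lt_0_compat; auto).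
    right. unfold weight. simpl. field. repeat split; auto; lra. }
  assert (HNx : lam ^ j * weight lam k <= N x).
  { eapply Rle_trans; [|apply (coord_bound x k Hx)]. right.
    unfold x, peakvec, weight. destruct (Nat.leb_spec j k); destruct (Nat.ltb_spec k (S c)); try lia.
    simpl. rewrite Rabs_pos_eq by (apply Rlt_le, Rdiv_lt_0_compat; auto). field. auto. }
  specialize (Hbb x Hx). pose proof (Hp j).
  apply Rmult_le_reg_l with (lam ^ j); auto. nra.
Qed.

(* Between 1/k_- and k_+ the weight has a peak, so T_lam is not bounded below. *)
Lemma interior_not_iso (lam : R) : 0 < lam -> / kminus E N < lam -> lam < kplus E N ->
  ~ iso_embedding E N (Tlam lam).
Proof.
  intros Hl H1 H2 [cc [Hcc Hbb]].
  set (Mv := 2 * lam / cc + 1).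
  assert (HMv : Mv * cc = 2 * lam + cc) by (unfold Mv; field; lra).
  assert (HMv1 : 1 < Mv) by (unfold Mv; assert (0 < 2 * lam / cc) by (apply Rdiv_lt_0_compat; lra); lra).
  destruct (peak_exists (weight lam) (Rmax 1 (shiftL_norm 1 * lam)) Mv) as [j [k [c [Hk [Hj Hc]]]]].
  - intro; apply weight_pos; auto.
  - apply Rmax_l.
  - auto.
  - intro; apply weight_step; auto.
  - apply weight_rise; auto.
  - intros P eps He. apply weight_fall; auto.
  - pose proof (peak_bound lam cc j k c Hl Hcc Hbb Hk). pose proof (weight_pos lam k Hl).
    assert (Mv * (cc * weight lam k) <= 2 * lam * weight lam k) by nra. nra.
Qed.

Lemma bounded_inverse (mu c : R) : (forall y, E y -> exists x, E x /\ y = Tlam mu x) ->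
  (forall x, E x -> c * N x <= N (Tlam mu x)) ->
  exists S : seqR -> seqR, (forall z, E z -> E (S z) /\ Tlam mu (S z) = z) /\
    (forall a b, E a -> E b -> c * N (ssub (S a) (S b)) <= N (ssub a b)).
Proof.
  intros Hsurj Hbb.
  set (S := fun z => epsilon (inhabits szero) (fun x => E x /\ z = Tlam mu x)).
  assert (HS' : forall z, E z -> E (S z) /\ Tlam mu (S z) = z).
  { intros z Hz. destruct (epsilon_spec (inhabits szero) (fun x => E x /\ z = Tlam mu x)) as [H1 H2];
      [apply Hsurj; auto|]. split; auto. }
  exists S. split; auto. intros a b Ha Hb.
  destruct (HS' a Ha) as [Ha1 Ha2]. destruct (HS' b Hb) as [Hb1 Hb2].
  eapply Rle_trans; [apply Hbb, E_sub; auto|]. rewrite Tlam_sub, Ha2, Hb2. lra.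
Qed.

(* Surjectivity together with a lower bound c transfers from T_mu to T_nu when
   |mu - nu| < c: solve T_nu x = y as the fixed point x = S (y - (mu - nu) x). *)
Lemma surj_transfer (mu nu c : R) : 0 < c ->
  (forall y, E y -> exists x, E x /\ y = Tlam mu x) ->
  (forall x, E x -> c * N x <= N (Tlam mu x)) -> Rabs (mu - nu) < c ->
  forall y, E y -> exists x, E x /\ y = Tlam nu x.
Proof.
  intros Hc Hsurj Hbb Hd y Hy.
  destruct (bounded_inverse mu c Hsurj Hbb) as [S [HS' HSl]].
  set (d := mu - nu). set (F := fun x => S (ssub y (sscal d x))).
  destruct (contraction_fixpoint F (Rabs d / c)) as [x [Hx Hfix]].
  - split; [apply Rdiv_le_0_compat; [apply Rabs_pos|auto]|].
    apply Rmult_lt_reg_r with c; auto. unfold Rdiv. rewrite Rmult_assoc, Rinv_l; unfold d; lra.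
  - intros x Hx. apply HS', E_sub, E_scal; auto.
  - intros a b Ha Hb. apply Rmult_le_reg_l with c; auto.
    eapply Rle_trans; [apply HSl; apply E_sub; auto; apply E_scal; auto|].
    replace (ssub (ssub y (sscal d a)) (ssub y (sscal d b))) with (sscal (- d) (ssub a b))
      by (apply functional_extensionality; intro; unfold ssub, sscal; ring).
    rewrite N_scal, Rabs_Ropp by (apply E_sub; auto). right. field. lra.
  - exists x. split; auto. rewrite (Tlam_perturb nu mu).
    assert (HT : Tlam mu x = ssub y (sscal d x)).
    { rewrite <- Hfix at 1. apply HS', E_sub, E_scal; auto. }
    rewrite HT. apply functional_extensionality; intro k. unfold sadd, ssub, sscal, d. ring.
Qed.

(* For 0 < nu < 1/k_-, T_nu is not onto: e_0 lies outside the kernel of f. *)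
Lemma not_surj_minus (nu : R) : 0 < nu -> nu < / kminus E N ->
  ~ (forall y, E y -> exists x, E x /\ y = Tlam nu x).
Proof.
  intros Hn Hlt Hsurj. destruct (Hsurj (unitv 0) (HU 0%nat)) as [x [Hx He]].
  pose proof (series_Tlam_zero nu Hn Hlt x Hx) as H.
  rewrite <- He, series_lamterm_e0 in H. lra.
Qed.

(* In the degenerate case 1/k_- = k_+ = lam, a lower bound for T_lam would make it
   onto (transferring from lam + eta > k_+) and then T_{lam - eta} onto as well. *)
Lemma degenerate_not_iso (lam : R) : 0 < lam -> / kminus E N = lam -> kplus E N = lam ->
  ~ iso_embedding E N (Tlam lam).
Proof.
  intros Hl Hm Hp [c [Hc Hbb]].
  set (eta := Rmin (c / 4) (lam / 2)).
  assert (Heta : 0 < eta) by (apply Rmin_glb_lt; lra).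
  assert (He1 : eta <= c / 4) by apply Rmin_l. assert (He2 : eta <= lam / 2) by apply Rmin_r.
  assert (Hsurj : forall y, E y -> exists x, E x /\ y = Tlam lam x).
  { apply (surj_transfer (lam + eta) lam (c - eta)); [lra|apply surj_plus; lra| |].
    - intros x Hx. pose proof (iso_perturb lam (lam + eta) c Hbb x Hx).
      replace (Rabs (lam + eta - lam)) with eta in H by (rewrite Rabs_pos_eq; lra). auto.
    - rewrite Rabs_pos_eq; lra. }
  apply (not_surj_minus (lam - eta)); [lra|lra|].
  apply (surj_transfer lam (lam - eta) c); auto. rewrite Rabs_pos_eq; lra.
Qed.

Lemma iso_in_region (lam : R) : 0 < lam -> iso_embedding E N (Tlam lam) ->
  lam < / kminus E N \/ kplus E N < lam.
Proof.
  intros Hl Hiso. apply NNPP. intro Hn.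
  assert (H1 : / kminus E N <= lam) by (apply Rnot_lt_le; intro; apply Hn; auto).
  assert (H2 : lam <= kplus E N) by (apply Rnot_lt_le; intro; apply Hn; auto).
  pose proof (Rinv_0_lt_compat _ kminus_pos).
  destruct (Rle_lt_or_eq_dec _ _ inv_kminus_le_kplus) as [Hlt|Heq].
  - (* a nondegenerate interval: perturb lam into its interior *)
    destruct Hiso as [c [Hc Hbb]].
    destruct (near_open_interval (/ kminus E N) (kplus E N) lam c) as [mu [Hmu Hd]]; auto.
    apply (interior_not_iso mu); try lra.
    exists (c - Rabs (mu - lam)). split; [lra|]. apply iso_perturb; auto.
  - apply (degenerate_not_iso lam); auto; lra.
Qed.

(** * Separability and order continuity *)

Hypothesis Hsep : separable E N.

(* A separable space contains no family, indexed by 0-1 sequences, whose members are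
   delta-apart whenever the indices differ (Cantor's diagonal argument). *)
Lemma no_separated_family (v : (nat -> bool) -> seqR) (delta : R) : 0 < delta ->
  (forall A, E (v A)) ->
  (forall A A' j, A j <> A' j -> delta <= N (ssub (v A) (v A'))) -> False.
Proof.
  intros Hd Hv Hsepar. destruct Hsep as [d [Hdd Hdense]].
  assert (HF : forall n, {A : nat -> bool |
            (exists A', N (ssub (v A') (d n)) < delta / 2) -> N (ssub (v A) (d n)) < delta / 2}).
  { intro n. apply constructive_indefinite_description.
    destruct (classic (exists A', N (ssub (v A') (d n)) < delta / 2)) as [[A' HA']|Hn].
    - exists A'; auto.
    - exists (fun _ => true). intro H; contradiction. }
  set (F := fun n => proj1_sig (HF n)).
  set (D := fun j => negb (F j j)).
  destruct (Hdense (v D) (Hv D) (delta / 2)) as [n Hn]; [lra|].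
  assert (HFn : N (ssub (v (F n)) (d n)) < delta / 2).
  { unfold F. destruct (HF n) as [A HA]. simpl. apply HA. exists D; auto. }
  assert (Hne : D n <> F n n) by (unfold D; destruct (F n n); simpl; congruence).
  pose proof (Hsepar D (F n) n Hne).
  pose proof (N_tri_sub (v D) (d n) (v (F n)) (Hv D) (Hdd n) (Hv (F n))).
  rewrite (N_sub_sym (d n)) in H0 by auto. lra.
Qed.

Lemma disjoint_blocks (x : seqR) (delta : R) : 0 < delta ->
  (forall M, exists n m, (M <= n)%nat /\ (n <= m)%nat /\ delta <= N (block x n m)) ->
  exists p q : nat -> nat, (forall i, (p i < q i)%nat /\ delta <= N (block x (p i) (q i))) /\
    (forall i j, (i < j)%nat -> (q i <= p j)%nat).
Proof.
  intros Hd Hbad.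
  assert (Hf : forall M, {b : nat * nat | (M <= fst b)%nat /\ (fst b < snd b)%nat /\
                                          delta <= N (block x (fst b) (snd b))}).
  { intro M. apply constructive_indefinite_description.
    destruct (Hbad M) as [n [m [H1 [H2 H3]]]]. exists (n, m). simpl. split; [auto|split; auto].
    destruct (Nat.eq_dec n m) as [->|]; [|lia].
    replace (block x m m) with szero in H3; [rewrite N_szero in H3; lra|].
    apply functional_extensionality; intro i. unfold block, szero.
    destruct (Nat.leb_spec m i); destruct (Nat.ltb_spec i m); simpl; auto; lia. }
  set (pp := fix pp (i : nat) : nat * nat :=
               match i with O => proj1_sig (Hf O) | S i' => proj1_sig (Hf (snd (pp i'))) end).
  assert (Hpp : forall i, (fst (pp i) < snd (pp i))%nat /\ delta <= N (block x (fst (pp i)) (snd (pp i)))).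
  { intros [|i]; simpl; apply (proj2_sig (Hf _)). }
  assert (Hnext : forall i, (snd (pp i) <= fst (pp (S i)))%nat).
  { intro i. change (pp (S i)) with (proj1_sig (Hf (snd (pp i)))). apply (proj2_sig (Hf _)). }
  exists (fun i => fst (pp i)), (fun i => snd (pp i)). split; auto.
  intros i j Hij. induction Hij as [|j Hij IH]; [apply Hnext|].
  pose proof (Hnext j). pose proof (proj1 (Hpp j)). lia.
Qed.

Lemma blocks_small (x : seqR) (delta : R) : E x -> 0 < delta ->
  exists M, forall n m, (M <= n)%nat -> (n <= m)%nat -> N (block x n m) < delta.
Proof.
  intros Hx Hd. apply NNPP. intro Hn.
  destruct (disjoint_blocks x delta Hd) as [p [q [Hpq Hord]]].
  { intro M. apply NNPP; intro Hn'. apply Hn. exists M. intros n m Hn1 Hn2.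
    apply Rnot_le_lt. intro Hle. apply Hn'. exists n, m; auto. }
  assert (Huniq : forall i j k, (p i <= k < q i)%nat -> (p j <= k < q j)%nat -> i = j).
  { intros i j k Hi Hj. destruct (Nat.lt_trichotomy i j) as [Hl|[He|Hl]]; auto;
      [pose proof (Hord i j Hl)|pose proof (Hord j i Hl)]; lia. }
  (* keep the blocks selected by a 0-1 sequence A *)
  set (v := fun (A : nat -> bool) (k : nat) =>
              if excluded_middle_informative (exists j, (p j <= k < q j)%nat /\ A j = true)
              then x k else 0).
  apply (no_separated_family v delta Hd).
  - intro A. apply (solid_E x _ Hx), dominated_cutoff. intro k. unfold v.
    destruct (excluded_middle_informative _); auto.
  - intros A A' j Hj. eapply Rle_trans; [apply (proj2 (Hpq j))|].
    apply (solid_N (ssub (v A) (v A'))); [apply E_sub; apply (solid_E x _ Hx), dominated_cutoff;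
      intro k; unfold v; destruct (excluded_middle_informative _); auto|].
    intro k. unfold block, ssub, v.
    destruct (Nat.leb_spec (p j) k); destruct (Nat.ltb_spec k (q j)); simpl;
      try (rewrite Rabs_R0; apply Rabs_pos).
    destruct (excluded_middle_informative (exists j0, (p j0 <= k < q j0)%nat /\ A j0 = true))
      as [[j1 [Hj1 HA1]]|HnA];
    destruct (excluded_middle_informative (exists j0, (p j0 <= k < q j0)%nat /\ A' j0 = true))
      as [[j2 [Hj2 HA2]]|HnA'].
    + assert (j1 = j) by (apply (Huniq j1 j k); auto; lia).
      assert (j2 = j) by (apply (Huniq j2 j k); auto; lia). subst. congruence.
    + rewrite Rminus_0_r; lra.
    + rewrite Rminus_0_l, Rabs_Ropp; lra.
    + exfalso. destruct (A j) eqn:EA.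
      * apply HnA. exists j. split; auto; lia.
      * destruct (A' j) eqn:EA'; [|congruence]. apply HnA'. exists j. split; auto; lia.
Qed.

Lemma tail_small (x : seqR) : E x -> forall eps, 0 < eps -> forall B,
  exists b, (B <= b)%nat /\ N (tail x b) < eps.
Proof.
  intros Hx.
  assert (Htr : forall n m, (n <= m)%nat -> ssub (trunc x m) (trunc x n) = block x n m).
  { intros n m Hnm. apply functional_extensionality; intro i. unfold ssub, trunc, block.
    destruct (Nat.ltb_spec i m); destruct (Nat.ltb_spec i n); destruct (Nat.leb_spec n i);
      simpl; try ring; lia. }
  destruct (complete (trunc x)) as [z [Hz Hc]]; [intro; apply trunc_E; auto|..].
  - intros eps He. destruct (blocks_small x eps Hx He) as [M HM]. exists M. intros m n Hm Hn.
    destruct (Nat.le_ge_cases n m).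
    + rewrite Htr by auto. apply HM; auto.
    + rewrite N_sub_sym by (apply trunc_E; auto). rewrite Htr by auto. apply HM; auto.
  - (* the truncations converge coordinatewise, hence in norm, to x itself *)
    assert (z = x).
    { apply functional_extensionality; intro k.
      pose proof (nconv_coord (trunc x) z k ltac:(intro; apply trunc_E; auto) Hz Hc) as H.
      apply (is_lim_seq_ext_loc _ (fun _ => x k)) in H.
      + apply is_lim_seq_unique in H. rewrite Lim_seq_const in H. injection H; auto.
      + exists (S k). intros n Hn. unfold trunc. destruct (Nat.ltb_spec k n); auto; lia. }
    subst z. intros eps He B. destruct (Hc eps He) as [M HM]. exists (max B M). split; [lia|].
    replace (tail x (max B M)) with (sscal (-1) (ssub (trunc x (max B M)) x)).
    + rewrite N_scal by (apply E_sub; auto; apply trunc_E; auto).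
      replace (Rabs (-1)) with 1 by (rewrite Rabs_left; lra). rewrite Rmult_1_l. apply HM. lia.
    + apply functional_extensionality; intro i. unfold sscal, ssub, trunc, tail.
      destruct (Nat.ltb i (max B M)); ring.
Qed.

(** * Without a lower bound the range is not closed *)

Definition approx_kernel (lam : R) : Prop :=
  forall eps, 0 < eps -> forall P, exists x Q, E x /\ N x = 1 /\ N (Tlam lam x) <= eps /\
    (P < Q)%nat /\ (forall k, (k < P)%nat \/ (Q <= k)%nat -> x k = 0).

Lemma normalize_small_image (lam eps : R) (x : seqR) : E x -> 0 < N x ->
  N (Tlam lam x) <= eps * N x ->
  E (sscal (/ N x) x) /\ N (sscal (/ N x) x) = 1 /\ N (Tlam lam (sscal (/ N x) x)) <= eps.
Proof.
  intros Hx Hn HT. assert (Hi : 0 <= / N x) by (apply Rlt_le, Rinv_0_lt_compat; auto).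
  split; [apply E_scal; auto|split].
  - rewrite N_scal, Rabs_pos_eq by auto. field. lra.
  - rewrite Tlam_scal, N_scal, Rabs_pos_eq by (try apply Tlam_E; auto).
    apply Rmult_le_reg_l with (N x); auto. rewrite <- Rmult_assoc, Rinv_r, Rmult_1_l by lra. lra.
Qed.

Lemma not_iso_small_image (lam : R) : ~ iso_embedding E N (Tlam lam) ->
  forall eps, 0 < eps -> exists x, E x /\ N x = 1 /\ N (Tlam lam x) <= eps.
Proof.
  intros Hn eps He.
  destruct (classic (exists x, E x /\ N (Tlam lam x) < eps * N x)) as [[x [Hx Hr]]|Hno].
  - assert (Hn0 : 0 < N x) by (pose proof (N_nonneg _ (Tlam_E lam x Hx)); nra).
    exists (sscal (/ N x) x). apply normalize_small_image; auto. lra.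
  - exfalso. apply Hn. exists eps. split; auto. intros x Hx.
    apply Rnot_lt_le. intro Hlt. apply Hno. exists x; auto.
Qed.
Lemma trunc_norm_lower (x : seqR) (b : nat) : E x -> N x <= N (trunc x (S b)) + N (tail x b).
Proof.
  intros Hx. replace x with (sadd (trunc x (S b)) (tail x (S b))) at 1.
  - eapply Rle_trans; [apply N_tri; [apply trunc_E|apply tail_E]; auto|].
    apply Rplus_le_compat_l, (solid_N (tail x b)); [apply tail_E; auto|].
    intro k. unfold tail. destruct (Nat.ltb_spec k (S b)); destruct (Nat.ltb_spec k b); try lia;
      try lra; rewrite Rabs_R0; apply Rabs_pos.
  - apply functional_extensionality; intro k. unfold sadd, trunc, tail. destruct (Nat.ltb k (S b)); ring.
Qed.

Lemma trunc_image_bound (lam : R) (x : seqR) (b : nat) : E x ->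
  N (Tlam lam (trunc x (S b))) <= N (Tlam lam x) + shiftR_norm 1 * N (tail x b).
Proof.
  intros Hx. rewrite Tlam_trunc.
  eapply Rle_trans; [apply N_tri; [apply trunc_E, Tlam_E|apply E_scal]; auto|].
  apply Rplus_le_compat.
  - apply (solid_N (Tlam lam x)); [apply Tlam_E; auto|]. apply dominated_cutoff.
    intro k; unfold trunc; destruct (Nat.ltb k (S b)); auto.
  - rewrite N_scal by auto. pose proof (shiftR_unit 1 b) as H. rewrite Nat.add_1_r in H.
    assert (Hc : Rabs (x b) * N (unitv b) <= N (tail x b)).
    { replace (x b) with (tail x b b) by (unfold tail; rewrite Nat.ltb_irrefl; auto).
      apply coord_bound, tail_E; auto. }
    pose proof (Rabs_pos (x b)). pose proof (proj1 (shiftR_spec 1)). nra.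
Qed.

(* If T_lam is not bounded below, approximate kernel vectors can be pushed beyond any P:
   shift one to the right by P, cut off its tail, and renormalize. *)
Lemma approx_kernel_of_not_iso (lam : R) : ~ iso_embedding E N (Tlam lam) -> approx_kernel lam.
Proof.
  intros Hnb eps He P.
  set (al := shiftR_norm P). set (be := shiftL_norm P). set (a1 := shiftR_norm 1).
  assert (Hal : 0 < al) by apply shiftR_pos. assert (Hbe : 0 < be) by apply shiftL_pos.
  assert (Ha1 : 0 < a1) by apply shiftR_pos.
  destruct (not_iso_small_image lam Hnb (eps / (4 * al * be))) as [x1 [Hx1 [HN1 HT1]]].
  { apply Rdiv_lt_0_compat; [lra|]. nra. }
  set (x2 := tau (Z.of_nat P) x1).
  assert (Hx2 : E x2) by (apply tau_E; auto).
  assert (HN2 : 1 <= be * N x2).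
  { rewrite <- HN1. unfold x2, be. rewrite <- (tau_neg_pos P x1) at 1. apply shiftL_bound; auto. }
  assert (HT2 : N (Tlam lam x2) <= eps / (4 * be)).
  { unfold x2. rewrite Tlam_tau. eapply Rle_trans; [apply shiftR_bound, Tlam_E; auto|].
    fold al. apply Rle_trans with (al * (eps / (4 * al * be))); [apply Rmult_le_compat_l; lra|].
    right. field. lra. }
  set (eta := Rmin (/ (2 * be)) (eps / (8 * a1 * be))).
  assert (Heta : 0 < eta).
  { apply Rmin_glb_lt; [apply Rinv_0_lt_compat; lra|]. apply Rdiv_lt_0_compat; [lra|]. nra. }
  destruct (tail_small x2 Hx2 eta Heta P) as [b [HbP Hb]].
  set (x3 := trunc x2 (S b)).
  assert (Hx3 : E x3) by (apply trunc_E; auto).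
  assert (HN3 : / (2 * be) <= N x3).
  { pose proof (trunc_norm_lower x2 b Hx2). assert (eta <= / (2 * be)) by apply Rmin_l.
    assert (/ be <= N x2) by (apply Rmult_le_reg_l with be; auto; rewrite Rinv_r by lra; lra).
    assert (/ be = / (2 * be) + / (2 * be)) by (field; lra). fold x3 in H. lra. }
  assert (HT3 : N (Tlam lam x3) <= eps * N x3).
  { eapply Rle_trans; [apply trunc_image_bound; auto|]. fold a1.
    assert (a1 * N (tail x2 b) <= eps / (8 * be)).
    { apply Rle_trans with (a1 * (eps / (8 * a1 * be))).
      - apply Rmult_le_compat_l; [lra|]. assert (eta <= eps / (8 * a1 * be)) by apply Rmin_r. lra.
      - right. field. lra. }
    apply Rle_trans with (eps * / (2 * be)); [|apply Rmult_le_compat_l; lra].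
    replace (eps * / (2 * be)) with (eps / (4 * be) + eps / (8 * be) + eps / (8 * be)) by (field; lra).
    assert (0 < eps / (8 * be)) by (apply Rdiv_lt_0_compat; lra). lra. }
  assert (Hn3 : 0 < N x3) by (pose proof (Rinv_0_lt_compat (2 * be) ltac:(lra)); lra).
  destruct (normalize_small_image lam eps x3 Hx3 Hn3 HT3) as [Hx4 [HN4 HT4]].
  exists (sscal (/ N x3) x3), (S b). split; [|split; [|split; [|split]]]; auto.
  - lia.
  - intros k Hk. unfold sscal, x3, trunc, x2. destruct Hk as [Hk|Hk].
    + destruct (Nat.ltb k (S b)); [|ring]. rewrite tau_pos_eq. destruct (Nat.leb_spec P k); [lia|ring].
    + destruct (Nat.ltb_spec k (S b)); [lia|ring].
Qed.

Lemma approx_kernel_seq (lam : R) : approx_kernel lam ->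
  exists (X : nat -> seqR) (P : nat -> nat), forall n,
    E (X n) /\ N (X n) = 1 /\ N (Tlam lam (X n)) <= (/ 4) ^ n /\ (P n < P (S n))%nat /\
    (forall k, (k < P n)%nat \/ (P (S n) <= k)%nat -> X n k = 0).
Proof.
  intros Hap.
  assert (Hstep : forall n P, {p : seqR * nat | E (fst p) /\ N (fst p) = 1 /\
      N (Tlam lam (fst p)) <= (/ 4) ^ n /\ (P < snd p)%nat /\
      forall k, (k < P)%nat \/ (snd p <= k)%nat -> fst p k = 0}).
  { intros n P. apply constructive_indefinite_description.
    destruct (Hap ((/4) ^ n) ltac:(apply pow_lt; lra) P) as [x [Q H]]. exists (x, Q); auto. }
  set (P := fix P (n : nat) : nat :=
              match n with O => O | S n' => snd (proj1_sig (Hstep n' (P n'))) end).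
  exists (fun n => fst (proj1_sig (Hstep n (P n)))), P. intro n.
  change (P (S n)) with (snd (proj1_sig (Hstep n (P n)))).
  destruct (Hstep n (P n)) as [p Hp]. exact Hp.
Qed.

Lemma wsum_E (X : nat -> seqR) (m : nat) : (forall n, E (X n)) -> E (wsum X m).
Proof.
  intros HX. induction m as [|m IH]; simpl; [apply (bsl_zero _ _ HB)|]. apply E_add; auto. apply E_scal; auto.
Qed.

(* For such a sequence the images T_lam (wsum X m) converge: their increments are
   2^n T_lam X_n, of norm at most 2^{-n}. *)
Lemma wsum_image_converges (lam : R) (X : nat -> seqR) : (forall n, E (X n)) ->
  (forall n, N (Tlam lam (X n)) <= (/ 4) ^ n) ->
  exists y, E y /\ nconv (fun m => Tlam lam (wsum X m)) y.
Proof.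
  intros HXE HXT. apply (complete_geom _ 1 (/ 2) O); [intro; apply Tlam_E, wsum_E; auto|lra|].
  intros n _. simpl wsum. rewrite Tlam_add, Tlam_scal.
  replace (ssub (sadd (Tlam lam (wsum X n)) (sscal (2 ^ n) (Tlam lam (X n)))) (Tlam lam (wsum X n)))
    with (sscal (2 ^ n) (Tlam lam (X n)))
    by (apply functional_extensionality; intro; unfold ssub, sadd, sscal; ring).
  rewrite N_scal, Rabs_pos_eq by (try apply Tlam_E; auto; apply pow_le; lra).
  replace (1 * (/ 2) ^ n) with (2 ^ n * (/ 4) ^ n)
    by (rewrite <- Rpow_mult_distr; replace (2 * / 4) with (/ 2) by field; ring).
  apply Rmult_le_compat_l; [apply pow_le; lra|auto].
Qed.

(* If the range of T_lam were closed, the limit of the images T_lam (wsum X m) would have a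
   preimage x agreeing with wsum X m below P_m, hence with 2^m X_m on [P_m, P_{m+1});
   then N x >= 2^m for every m. *)
Lemma not_closed_range (lam : R) : 0 < lam -> approx_kernel lam -> ~ closed_range E N (Tlam lam).
Proof.
  intros Hl Hap Hcl. destruct (approx_kernel_seq lam Hap) as [X [P HX]].
  assert (HXE : forall n, E (X n)) by (intro; apply HX).
  assert (HP : forall n, (P n < P (S n))%nat) by (intro; apply HX).
  assert (Hsupp : forall n k, (k < P n)%nat \/ (P (S n) <= k)%nat -> X n k = 0) by (intro; apply HX).
  destruct (wsum_image_converges lam X HXE (fun n => proj1 (proj2 (proj2 (HX n))))) as [y [Hy Hc]].
  destruct (Hcl y Hy) as [x [Hx Hxy]].
  { intros eps He. destruct (Hc eps He) as [M HM]. exists (wsum X M). split; [apply wsum_E; auto|].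
    rewrite N_sub_sym by (auto; apply Tlam_E, wsum_E; auto). apply HM; auto. }
  assert (Hyw : forall m k, (k < P m)%nat -> y k = Tlam lam (wsum X m) k).
  { intros m k Hk.
    pose proof (nconv_coord (fun m => Tlam lam (wsum X m)) y k
                  ltac:(intro; apply Tlam_E, wsum_E; auto) Hy Hc) as H.
    apply (is_lim_seq_ext_loc _ (fun _ => Tlam lam (wsum X m) k)) in H.
    - apply is_lim_seq_unique in H. rewrite Lim_seq_const in H. injection H; intros; congruence.
    - exists m. intros n Hn.
      apply (Tlam_wsum_stable lam X P HP (fun n k Hk => Hsupp n k (or_introl Hk))); auto. }
  assert (Hxz : forall m k, (k < P m)%nat -> x k = wsum X m k).
  { intros m k Hk.
    assert (forall k, (k < P m)%nat -> ssub x (wsum X m) k = 0).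
    { apply (Tlam_zero_below lam _ (P m) Hl). intros k0 Hk0. rewrite Tlam_sub. unfold ssub.
      rewrite <- Hxy, (Hyw m k0 Hk0). ring. }
    specialize (H k Hk). unfold ssub in H. lra. }
  assert (Hbig : forall m, 2 ^ m <= N x).
  { intro m. replace (2 ^ m) with (N (sscal (2 ^ m) (X m))).
    2: { rewrite N_scal, (proj1 (proj2 (HX m))), Rabs_pos_eq by (auto; apply pow_le; lra). ring. }
    apply (solid_N x); auto. apply dominated_cutoff. intro k. unfold sscal.
    destruct (Nat.lt_ge_cases k (P m)) as [Hk1|Hk1];
      [right; rewrite Hsupp by auto; ring|].
    destruct (Nat.lt_ge_cases k (P (S m))) as [Hk2|Hk2]; [left|right; rewrite Hsupp by auto; ring].
    rewrite (Hxz (S m) k Hk2). simpl. unfold sadd, sscal.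
    rewrite (wsum_zero_above X P HP (fun n k Hk => Hsupp n k (or_intror Hk))) by auto. ring. }
  destruct (pow_large 2 (N x)) as [m Hm]; [lra|]. specialize (Hm m (le_n _)). specialize (Hbig m). lra.
Qed.

Lemma closed_range_iso (lam : R) : 0 < lam ->
  closed_range E N (Tlam lam) -> iso_embedding E N (Tlam lam).
Proof.
  intros Hl Hcl. apply NNPP. intro Hn.
  apply (not_closed_range lam Hl); auto. apply approx_kernel_of_not_iso; auto.
Qed.

Lemma iso_iff_region (lam : R) : 0 < lam ->
  iso_embedding E N (Tlam lam) <-> (lam < / kminus E N \/ kplus E N < lam).
Proof.
  intros Hl. split; [apply iso_in_region; auto|].
  intros [H|H]; [apply iso_minus|apply iso_plus]; auto.
Qed.

End ShiftOperators.

Theorem proposition5p1 (E : seqR -> Prop) (N : seqR -> R) :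
  BanachSeqLattice E N ->
  separable E N ->
  (forall k, E (unitv k)) ->
  shifts_bounded E N ->
  is_lim_seq (fun n => Rpower (supplus N (S n)) (/ INR (S n))) (kplus E N) ->
  is_lim_seq (fun n => Rpower (supminus N (S n)) (/ INR (S n))) (kminus E N) ->
  forall lam : R, 0 < lam ->
  ((iso_embedding E N (Tlam lam) <-> closed_range E N (Tlam lam)) /\
   (closed_range E N (Tlam lam) <->
      ((lam < / kminus E N) \/ (kplus E N < lam)))) /\
  (kplus E N < lam -> forall y, E y -> exists x, E x /\ y = Tlam lam x) /\
  (lam < / kminus E N ->
     (forall a, E a -> ex_series (lamterm lam a)) /\
     (forall y, (exists x, E x /\ y = Tlam lam x) <->
                (E y /\ Series (lamterm lam y) = 0)) /\
     (exists a, E a /\ Series (lamterm lam a) <> 0)).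
Proof.
  intros HB Hsep HU HS Hkp Hkm lam Hl.
  assert (Hcl : iso_embedding E N (Tlam lam) <-> closed_range E N (Tlam lam)).
  { split; [apply (iso_closed_range E N HB HS)|apply (closed_range_iso E N HB HU HS Hsep lam Hl)]. }
  pose proof (iso_iff_region E N HB HU HS Hkp Hkm lam Hl) as Hreg.
  split; [split; [exact Hcl|rewrite <- Hcl; exact Hreg]|split].
  - apply (surj_plus E N HB HU HS Hkp lam Hl).
  - intro Hlt. split; [|split].
    + apply (ex_series_lam E N HB HU HS Hkm lam Hl Hlt).
    + intro y. split.
      * intros [x [Hx ->]]. split; [apply (Tlam_E E N HB HS); auto|].
        apply (series_Tlam_zero E N HB HU HS Hkm lam Hl Hlt x Hx).
      * intros [Hy Hs]. apply (kernel_in_range E N HB HU HS Hkm lam Hl Hlt y Hy Hs).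
    + exists (unitv 0). split; auto. rewrite series_lamterm_e0. lra.
Qed.
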